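(* Let $\eta_\varepsilon$ be as in the context. Let $b\in(-1,1)$, $a\in(0,1)$ (possibly depending on $\varepsilon$), and let $\dot a,\dot b,\dot B$ be real parameters. Set $A=\sqrt{1-b^2}$, $B=\frac{1}{\sqrt2}\sqrt{1-a^2}\sqrt{1-b^2}$, $z_\pm=\varepsilon^{-1}B(x\pm a)$, and define $$ K_{\rm overlap}=\frac12\dot b(1-b^2)^{1/2}\int_{\mathbb R}\eta_\varepsilon^2\big(\tanh(z_+)\mathrm{sech}^2(z_-)-\tanh(z_-)\mathrm{sech}^2(z_+)\big)dx-\varepsilon^{-1}b(1-b^2)^{3/2}(B\dot a+\dot Ba)\int_{\mathbb R}\eta_\varepsilon^2\,\mathrm{sech}^2(z_+)\mathrm{sech}^2(z_-)\,dx . $$ Assume there are constants $C_1,C_2>0$ with $a\le C_1\varepsilon^{1/6}$ and $e^{-4Ba\varepsilon^{-1}}\le C_2\varepsilon^2|\log\varepsilon|$ for all small $\varepsilon$. Then, as $\varepsilon\to0$, $$ K_{\rm overlap}=2\varepsilon\dot b(1-b^2)^{1/2}B^{-1}(1-a^2)\big(1+\mathcal O(\varepsilon^{1/3})\big)-16\,b(1-b^2)^{3/2}\big(\dot a+B^{-1}\dot Ba\big)(1-a^2)e^{-4Ba\varepsilon^{-1}}\big(2Ba\varepsilon^{-1}-1\big)\big(1+\mathcal O(\varepsilon^{1/3})\big). $$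
   Context: For all sufficiently small $\varepsilon>0$, $\eta_\varepsilon:\mathbb R\to(0,\infty)$ is a smooth solution of $\varepsilon^2\eta_\varepsilon''+(1-x^2-\eta_\varepsilon^2)\eta_\varepsilon=0$ on $\mathbb R$ that decays to zero as $|x|\to\infty$ faster than any exponential, and it has the following properties: $\eta_\varepsilon(x)\to\eta_0(x)$ pointwise as $\varepsilon\to0$, where $\eta_0(x)=(1-x^2)^{1/2}$ for $|x|<1$ and $\eta_0(x)=0$ for $|x|>1$; for every compact $K\subset(-1,1)$ there is $C_K>0$ with $\|\eta_\varepsilon-\eta_0\|_{C^1(K)}\le C_K\varepsilon^2$; and there is $C>0$ with $\|\eta_\varepsilon-\eta_0\|_{L^\infty}\le C\varepsilon^{1/3}$, $\|\eta_\varepsilon'\|_{L^\infty}\le C\varepsilon^{-1/3}$, $\|\eta_\varepsilon''\|_{L^\infty}\le C\varepsilon^{-1}$. The notation $f=g(1+\mathcal O(\varepsilon^{1/3}))$ means $|f/g-1|\le C\varepsilon^{1/3}$ for some constant $C$ and all sufficiently small $\varepsilon$. *)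

From Stdlib Require Import Reals Lra.
Open Scope R_scope.

Definition sech (x : R) : R := / cosh x.

Definition eta0 (x : R) : R :=
  if Rlt_dec (Rabs x) 1 then sqrt (1 - x ^ 2) else 0.

Definition deta0 (x : R) : R := - x / sqrt (1 - x ^ 2).

Definition smooth (f : R -> R) : Prop :=
  exists D : nat -> R -> R, D O = f /\
    forall (n : nat) (x : R), derivable_pt_lim (D n) x (D (S n) x).

Definition improper_integral (f : R -> R) (l : R) : Prop :=
  (forall M : R, inhabited (Riemann_integrable f (- M) M)) /\
  forall e : R, 0 < e -> exists M0 : R, forall M : R, M0 <= M ->
    forall pr : Riemann_integrable f (- M) M, Rabs (RiemannInt pr - l) < e.

Definition eta_family (eta deta ddeta : R -> R -> R) : Prop :=
  (exists e0 : R, 0 < e0 /\ forall eps : R, 0 < eps < e0 ->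
     smooth (eta eps) /\
     (forall x, derivable_pt_lim (eta eps) x (deta eps x)) /\
     (forall x, derivable_pt_lim (deta eps) x (ddeta eps x)) /\
     (forall x, 0 < eta eps x) /\
     (forall x, eps ^ 2 * ddeta eps x + (1 - x ^ 2 - (eta eps x) ^ 2) * eta eps x = 0) /\
     (forall k e : R, 0 < k -> 0 < e -> exists M : R, forall x : R,
        M <= Rabs x -> Rabs (eta eps x) * exp (k * Rabs x) < e)) /\
  (forall x e : R, 0 < e -> exists d : R, 0 < d /\ forall eps : R,
     0 < eps < d -> Rabs (eta eps x - eta0 x) < e) /\
  (forall c d : R, -1 < c -> d < 1 ->
     exists CK e1 : R, 0 < CK /\ 0 < e1 /\ forall eps : R, 0 < eps < e1 ->
       forall x : R, c <= x <= d ->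
         Rabs (eta eps x - eta0 x) <= CK * eps ^ 2 /\
         Rabs (deta eps x - deta0 x) <= CK * eps ^ 2) /\
  (exists C e1 : R, 0 < C /\ 0 < e1 /\ forall eps : R, 0 < eps < e1 ->
     forall x : R,
       Rabs (eta eps x - eta0 x) <= C * Rpower eps (1/3) /\
       Rabs (deta eps x) <= C * / Rpower eps (1/3) /\
       Rabs (ddeta eps x) <= C * / eps).

Definition Bpar (a b : R) : R := / sqrt 2 * sqrt (1 - a ^ 2) * sqrt (1 - b ^ 2).

Definition f_tanh (eta : R -> R) (eps a b : R) (x : R) : R :=
  let B := Bpar a b in
  let zp := / eps * B * (x + a) in
  let zm := / eps * B * (x - a) in
  (eta x) ^ 2 * (tanh zp * (sech zm) ^ 2 - tanh zm * (sech zp) ^ 2).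

Definition f_sech (eta : R -> R) (eps a b : R) (x : R) : R :=
  let B := Bpar a b in
  let zp := / eps * B * (x + a) in
  let zm := / eps * B * (x - a) in
  (eta x) ^ 2 * ((sech zp) ^ 2 * (sech zm) ^ 2).

From Stdlib Require Import Reals Lra Psatz.
Open Scope R_scope.

(* Put k = B/eps, c = 2ka and w = eta_eps^2.  The two integrands are w times
   the explicit kernels
     tanh_kernel = tanh(k(x+a)) sech^2(k(x-a)) - tanh(k(x-a)) sech^2(k(x+a)),
     sech_kernel = sech^2(k(x+a)) sech^2(k(x-a)).
   Both kernels have elementary primitives built from ln cosh and tanh, so
   their integrals over R are exact: (4/k)(coth c - c/sinh^2 c) and
   4 (c coth c - 1)/(k sinh^2 c).  Since w = 1 - x^2 + O(eps^{1/3}) and the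
   kernels live near x = -a and x = a, replacing w by 1 - a^2 costs an error
   controlled by |x^2 - a^2| against the kernels, again estimated through
   explicit primitives of sech-type majorants.  Large-c asymptotics then give
   the two leading terms, and the hypotheses a = O(eps^{1/6}) and
   e^{-2c} = O(eps^2 |log eps|) make every relative error O(eps^{1/3}). *)

Definition primitive (F f : R -> R) : Prop :=
  (forall x, derivable_pt_lim F x (f x)) /\ continuity f.

Lemma RiemannInt_primitive F f (HF : primitive F f) a b
  (pr : Riemann_integrable f a b) : RiemannInt pr = F b - F a.
Proof.
  destruct HF as [Hd Hc].
  set (d := (fun x => exist (fun l => derivable_pt_abs F x l) (f x) (Hd x)) : derivable F).
  assert (Hc' : continuity (derive F d)) by exact Hc.
  exact (@FTC_Riemann (@mkC1 F d Hc') a b pr).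
Qed.

Lemma continuity_Riemann_integrable f a b : continuity f -> Riemann_integrable f a b.
Proof.
  intro Hc. destruct (Rle_dec a b).
  - apply continuity_implies_RiemannInt; auto.
  - apply RiemannInt_P1; apply continuity_implies_RiemannInt; [lra|auto].
Qed.

Lemma RiemannInt_abs_le h p a b (pr : Riemann_integrable h a b)
  (pp : Riemann_integrable p a b) :
  a <= b -> (forall x, Rabs (h x) <= p x) -> Rabs (RiemannInt pr) <= RiemannInt pp.
Proof.
  intros Hab Hh.
  eapply Rle_trans. apply (RiemannInt_P17 pr (RiemannInt_P16 pr)). lra.
  apply RiemannInt_P19; auto.
Qed.

Lemma improper_integral_primitive F f V : primitive F f ->
  (forall e, 0 < e -> exists M0, forall M, M0 <= M -> Rabs (F M - F (-M) - V) < e) ->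
  improper_integral f V.
Proof.
  intros HF Hlim. split.
  - intro M. constructor. apply continuity_Riemann_integrable, HF.
  - intros e he. destruct (Hlim e he) as [M0 HM0]. exists M0. intros M HM pr.
    rewrite (RiemannInt_primitive F f HF). auto.
Qed.

Lemma improper_integral_lin f g l1 l2 c :
  improper_integral f l1 -> improper_integral g l2 ->
  improper_integral (fun x => f x + c * g x) (l1 + c * l2).
Proof.
  intros [Hf1 Hf2] [Hg1 Hg2]. split.
  - intro M. destruct (Hf1 M) as [p1]. destruct (Hg1 M) as [p2].
    constructor. apply RiemannInt_P10; auto.
  - intros e he.
    assert (Hc : 0 < Rabs c + 1) by (pose proof (Rabs_pos c); lra).
    assert (he2 : 0 < e / (2 * (Rabs c + 1))) by (apply Rdiv_lt_0_compat; lra).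
    destruct (Hf2 (e / 2) ltac:(lra)) as [M1 HM1]. destruct (Hg2 _ he2) as [M2 HM2].
    exists (Rmax M1 M2). intros M HM pr.
    destruct (Hf1 M) as [p1]. destruct (Hg1 M) as [p2].
    rewrite (RiemannInt_P13 p1 p2 pr).
    assert (A1 := HM1 M (Rle_trans _ _ _ (Rmax_l _ _) HM) p1).
    assert (A2 := HM2 M (Rle_trans _ _ _ (Rmax_r _ _) HM) p2).
    replace (RiemannInt p1 + c * RiemannInt p2 - (l1 + c * l2)) with
      ((RiemannInt p1 - l1) + c * (RiemannInt p2 - l2)) by ring.
    eapply Rle_lt_trans. apply Rabs_triang. rewrite Rabs_mult.
    assert (Rabs c * Rabs (RiemannInt p2 - l2) <= (Rabs c + 1) * (e / (2 * (Rabs c + 1))))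
      by (apply Rmult_le_compat; try apply Rabs_pos; lra).
    replace ((Rabs c + 1) * (e / (2 * (Rabs c + 1)))) with (e / 2) in H by (field; lra).
    lra.
Qed.

Lemma improper_integral_abs_le h l p P U M1 : improper_integral h l -> primitive P p ->
  (forall x, Rabs (h x) <= p x) -> (forall M, M1 <= M -> P M - P (-M) <= U) -> Rabs l <= U.
Proof.
  intros [H1 H2] HP Hh HU.
  destruct (Rle_lt_dec (Rabs l) U) as [|Hlt]; auto. exfalso.
  destruct (H2 (Rabs l - U) ltac:(lra)) as [M0 HM0].
  set (M := Rmax (Rmax M0 M1) 0).
  assert (HM0' : M0 <= M) by (unfold M; eapply Rle_trans; [apply Rmax_l|apply Rmax_l]).
  assert (HM1' : M1 <= M) by (unfold M; eapply Rle_trans; [apply Rmax_r|apply Rmax_l]).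
  assert (HM2' : - M <= M) by (assert (0 <= M) by (unfold M; apply Rmax_r); lra).
  destruct (H1 M) as [pr].
  assert (Hclose := HM0 M HM0' pr).
  assert (Hmaj := RiemannInt_abs_le h p _ _ pr
                    (continuity_Riemann_integrable p _ _ (proj2 HP)) HM2' Hh).
  rewrite (RiemannInt_primitive P p HP) in Hmaj.
  assert (Hbound := HU M HM1').
  assert (Rabs l <= Rabs (RiemannInt pr) + Rabs (RiemannInt pr - l)).
  { replace l with (RiemannInt pr - (RiemannInt pr - l)) at 1 by ring.
    eapply Rle_trans. apply Rabs_triang. rewrite Rabs_Ropp. lra. }
  lra.
Qed.

Lemma symmetric_window_increment f p P (Hc : continuity f) : primitive P p ->
  (forall x, Rabs (f x) <= p x) -> forall M M', 0 <= M -> M <= M' ->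
  Rabs (RiemannInt (continuity_Riemann_integrable f (-M') M' Hc)
        - RiemannInt (continuity_Riemann_integrable f (-M) M Hc))
  <= (P M' - P M) + (P (-M) - P (-M')).
Proof.
  intros HP Hfp M M' H0 H1.
  assert (E1 := RiemannInt_P26 (continuity_Riemann_integrable f (-M') (-M) Hc)
    (continuity_Riemann_integrable f (-M) M Hc) (continuity_Riemann_integrable f (-M') M Hc)).
  assert (E2 := RiemannInt_P26 (continuity_Riemann_integrable f (-M') M Hc)
    (continuity_Riemann_integrable f M M' Hc) (continuity_Riemann_integrable f (-M') M' Hc)).
  match goal with |- Rabs (?J' - ?J) <= _ =>
    replace (J' - J) with (RiemannInt (continuity_Riemann_integrable f M M' Hc)
                        + RiemannInt (continuity_Riemann_integrable f (-M') (-M) Hc)) by lra end.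
  eapply Rle_trans. apply Rabs_triang.
  apply Rplus_le_compat.
  - rewrite <- (RiemannInt_primitive P p HP M M' (continuity_Riemann_integrable p M M' (proj2 HP))).
    apply RiemannInt_abs_le; auto.
  - rewrite <- (RiemannInt_primitive P p HP (-M') (-M) (continuity_Riemann_integrable p _ _ (proj2 HP))).
    apply RiemannInt_abs_le; auto. lra.
Qed.

Lemma improper_integral_exists f p P : continuity f -> primitive P p ->
  (forall x, Rabs (f x) <= p x) ->
  (forall e, 0 < e -> exists M0, forall M M', M0 <= M -> M <= M' ->
      (P M' - P M) + (P (-M) - P (-M')) < e) ->
  exists l, improper_integral f l.
Proof.
  intros Hc HP Hfp Htail.
  set (S := fun M => RiemannInt (continuity_Riemann_integrable f (-M) M Hc)).
  assert (Hinc : forall M M', 0 <= M -> M <= M' ->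
            Rabs (S M' - S M) <= (P M' - P M) + (P (-M) - P (-M')))
    by exact (symmetric_window_increment f p P Hc HP Hfp).
  set (u := fun n => S (INR n)).
  assert (Hcau : Cauchy_crit u).
  { intros e he. destruct (Htail e he) as [M0 HM0].
    destruct (INR_unbounded (Rmax M0 0)) as [N HN].
    pose proof (Rmax_l M0 0). pose proof (Rmax_r M0 0).
    exists N. intros n m Hn Hm. unfold Rdist, u.
    assert (INR N <= INR n) by (apply le_INR; lia).
    assert (INR N <= INR m) by (apply le_INR; lia).
    destruct (Rle_dec (INR n) (INR m)).
    - rewrite <- Rabs_Ropp, Ropp_minus_distr.
      eapply Rle_lt_trans. apply Hinc; lra. apply HM0; lra.
    - eapply Rle_lt_trans. apply Hinc; lra. apply HM0; lra. }
  destruct (R_complete u Hcau) as [l Hl].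
  exists l. split.
  - intro M. constructor. apply continuity_Riemann_integrable; auto.
  - intros e he.
    destruct (Htail (e / 2) ltac:(lra)) as [M0 HM0].
    destruct (Hl (e / 2) ltac:(lra)) as [N1 HN1].
    exists (Rmax M0 0). intros M HM pr.
    pose proof (Rmax_l M0 0). pose proof (Rmax_r M0 0).
    destruct (INR_unbounded M) as [n0 Hn0].
    set (n := max n0 N1).
    assert (Hn : M <= INR n) by (assert (INR n0 <= INR n) by (apply le_INR; lia); lra).
    assert (A := Hinc M (INR n) ltac:(lra) Hn).
    assert (B := HM0 M (INR n) ltac:(lra) Hn).
    assert (C := HN1 n (Nat.le_max_r _ _)). unfold Rdist, u in C.
    rewrite (RiemannInt_P5 pr (continuity_Riemann_integrable f (-M) M Hc)). fold (S M).
    replace (S M - l) with (- (S (INR n) - S M) + (S (INR n) - l)) by ring.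
    eapply Rle_lt_trans. apply Rabs_triang. rewrite Rabs_Ropp. lra.
Qed.

Lemma exp_monotone x y : x <= y -> exp x <= exp y.
Proof. intros [H|H]; [left; apply exp_increasing; auto | subst; lra]. Qed.

Lemma exp_decay_eventually K beta e : 0 <= K -> 0 < beta -> 0 < e ->
  exists X, forall x, X <= x -> K * exp (- (beta * x)) < e.
Proof.
  intros HK Hb He.
  exists (ln ((K + 1) / e) / beta). intros x Hx.
  assert (H1 : exp (- (beta * x)) <= e / (K + 1)).
  { replace (e / (K + 1)) with (exp (- ln ((K + 1) / e))).
    - apply exp_monotone.
      apply (Rmult_le_compat_l beta) in Hx; [|lra].
      replace (beta * (ln ((K + 1) / e) / beta)) with (ln ((K + 1) / e)) in Hx by (field; lra).
      lra.
    - rewrite exp_Ropp, exp_ln by (apply Rdiv_lt_0_compat; lra). field. split; lra. }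
  assert (0 < exp (- (beta * x))) by apply exp_pos.
  apply Rle_lt_trans with (K * (e / (K + 1))). apply Rmult_le_compat_l; lra.
  replace (K * (e / (K + 1))) with (e - e / (K + 1)) by (field; lra).
  assert (0 < e / (K + 1)) by (apply Rdiv_lt_0_compat; lra). lra.
Qed.

(* Calculus rules in beta-reduced form, so that they apply directly to goals
   about explicit lambda terms (the library states them for plus_fct etc.). *)
Lemma D_eq f x l l' : derivable_pt_lim f x l -> l = l' -> derivable_pt_lim f x l'.
Proof. intros H ->; auto. Qed.
Lemma D_plus f g x l1 l2 : derivable_pt_lim f x l1 -> derivable_pt_lim g x l2 ->
  derivable_pt_lim (fun y => f y + g y) x (l1 + l2).
Proof. intros; apply (derivable_pt_lim_plus f g); auto. Qed.
Lemma D_minus f g x l1 l2 : derivable_pt_lim f x l1 -> derivable_pt_lim g x l2 ->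
  derivable_pt_lim (fun y => f y - g y) x (l1 - l2).
Proof. intros; apply (derivable_pt_lim_minus f g); auto. Qed.
Lemma D_scal c f x l : derivable_pt_lim f x l ->
  derivable_pt_lim (fun y => c * f y) x (c * l).
Proof. intros; apply (derivable_pt_lim_scal f c); auto. Qed.
Lemma D_opp f x l : derivable_pt_lim f x l -> derivable_pt_lim (fun y => - f y) x (- l).
Proof. intros; apply (derivable_pt_lim_opp f); auto. Qed.
Lemma D_divc f c x l : derivable_pt_lim f x l -> derivable_pt_lim (fun y => f y / c) x (l / c).
Proof.
  intros. apply (derivable_pt_lim_ext (fun y => / c * f y)); [intros; unfold Rdiv; ring|].
  eapply D_eq. apply D_scal; eauto. unfold Rdiv; ring.
Qed.
Lemma D_comp f g x l1 l2 : derivable_pt_lim f x l1 -> derivable_pt_lim g (f x) l2 ->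
  derivable_pt_lim (fun y => g (f y)) x (l2 * l1).
Proof. intros. apply (derivable_pt_lim_comp f g); auto. Qed.
Lemma D_div f g x l1 l2 : derivable_pt_lim f x l1 -> derivable_pt_lim g x l2 -> g x <> 0 ->
  derivable_pt_lim (fun y => f y / g y) x ((l1 * g x - l2 * f x) / (g x) ^ 2).
Proof.
  intros. apply (D_eq _ _ ((l1 * g x - l2 * f x) / Rsqr (g x))).
  - apply (derivable_pt_lim_div f g); auto.
  - f_equal. unfold Rsqr; simpl; ring.
Qed.
Lemma D_affine_plus k s x : derivable_pt_lim (fun y => k * (y + s)) x k.
Proof.
  eapply D_eq. apply D_scal, D_plus; [apply derivable_pt_lim_id | apply derivable_pt_lim_const].
  ring.
Qed.
Lemma D_affine_minus k s x : derivable_pt_lim (fun y => k * (y - s)) x k.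
Proof.
  eapply D_eq. apply D_scal, D_minus; [apply derivable_pt_lim_id | apply derivable_pt_lim_const].
  ring.
Qed.

Lemma C_of_D f f' : (forall x, derivable_pt_lim f x (f' x)) -> continuity f.
Proof. intros H x. apply derivable_continuous_pt. exists (f' x). apply H. Qed.
Lemma C_plus f g : continuity f -> continuity g -> continuity (fun y => f y + g y).
Proof. intros; apply (continuity_plus f g); auto. Qed.
Lemma C_minus f g : continuity f -> continuity g -> continuity (fun y => f y - g y).
Proof. intros; apply (continuity_minus f g); auto. Qed.
Lemma C_mult f g : continuity f -> continuity g -> continuity (fun y => f y * g y).
Proof. intros; apply (continuity_mult f g); auto. Qed.
Lemma C_const c : continuity (fun _ => c).
Proof. apply continuity_const. intros x y; auto. Qed.
Lemma C_pow2 f : continuity f -> continuity (fun y => f y ^ 2).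
Proof. intros. simpl. apply C_mult; auto. apply C_mult; auto. apply C_const. Qed.
Lemma C_affine_plus g k s : continuity g -> continuity (fun y => g (k * (y + s))).
Proof.
  intros Hg x. apply (continuity_pt_comp (fun y => k * (y + s)) g); auto.
  apply (C_of_D _ (fun _ => k)). intro; apply D_affine_plus.
Qed.
Lemma C_affine_minus g k s : continuity g -> continuity (fun y => g (k * (y - s))).
Proof.
  intros Hg x. apply (continuity_pt_comp (fun y => k * (y - s)) g); auto.
  apply (C_of_D _ (fun _ => k)). intro; apply D_affine_minus.
Qed.

Lemma cosh_exp z : cosh z = (exp z + / exp z) / 2.
Proof. unfold cosh. rewrite exp_Ropp. auto. Qed.
Lemma sinh_exp z : sinh z = (exp z - / exp z) / 2.
Proof. unfold sinh. rewrite exp_Ropp. auto. Qed.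
Lemma cosh_pos z : 0 < cosh z.
Proof. unfold cosh. pose proof (exp_pos z); pose proof (exp_pos (-z)). lra. Qed.
Lemma cosh_ge_1 z : 1 <= cosh z.
Proof.
  rewrite cosh_exp. pose proof (exp_pos z). set (u := exp z) in *.
  apply (Rmult_le_reg_r (2 * u)); [lra|]. field_simplify; [|lra].
  pose proof (pow2_ge_0 (u - 1)). nra.
Qed.
Lemma cosh_sinh z : cosh z ^ 2 - sinh z ^ 2 = 1.
Proof. rewrite cosh_exp, sinh_exp. pose proof (exp_pos z). field. lra. Qed.
Lemma cosh_even z : cosh (- z) = cosh z.
Proof. unfold cosh. rewrite Ropp_involutive. field. Qed.
Lemma sinh_odd z : sinh (- z) = - sinh z.
Proof. unfold sinh. rewrite Ropp_involutive. field. Qed.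
Lemma tanh_odd z : tanh (- z) = - tanh z.
Proof. unfold tanh. rewrite cosh_even, sinh_odd. field. pose proof (cosh_pos z); lra. Qed.
Lemma tanh_bound z : Rabs (tanh z) <= 1.
Proof.
  unfold tanh. pose proof (cosh_sinh z). pose proof (cosh_pos z).
  apply Rabs_le. split; [apply (Rmult_le_reg_r (cosh z)) | apply (Rmult_le_reg_r (cosh z))];
    auto; unfold Rdiv; rewrite Rmult_assoc, Rinv_l by lra; nra.
Qed.
Lemma one_minus_tanh z : 1 - tanh z = 2 / (exp z ^ 2 + 1).
Proof. unfold tanh. rewrite cosh_exp, sinh_exp. pose proof (exp_pos z). field. split; nra. Qed.
Lemma sech_pos z : 0 < sech z.
Proof. unfold sech. apply Rinv_0_lt_compat, cosh_pos. Qed.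
Lemma sech_le_1 z : sech z <= 1.
Proof. unfold sech. pose proof (cosh_ge_1 z). rewrite <- Rinv_1. apply Rinv_le_contravar; lra. Qed.

Lemma D_cosh f x l : derivable_pt_lim f x l ->
  derivable_pt_lim (fun y => cosh (f y)) x (sinh (f x) * l).
Proof. intros. apply (D_comp f cosh); auto. apply derivable_pt_lim_cosh. Qed.
Lemma D_sinh f x l : derivable_pt_lim f x l ->
  derivable_pt_lim (fun y => sinh (f y)) x (cosh (f x) * l).
Proof. intros. apply (D_comp f sinh); auto. apply derivable_pt_lim_sinh. Qed.
Lemma D_tanh f x l : derivable_pt_lim f x l ->
  derivable_pt_lim (fun y => tanh (f y)) x (l / cosh (f x) ^ 2).
Proof.
  intros. unfold tanh. pose proof (cosh_pos (f x)). pose proof (cosh_sinh (f x)).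
  eapply D_eq.
  - apply (D_div (fun y => sinh (f y)) (fun y => cosh (f y))); [apply D_sinh, H | apply D_cosh, H | lra].
  - replace (cosh (f x) * l * cosh (f x) - sinh (f x) * l * sinh (f x))
      with (l * (cosh (f x) ^ 2 - sinh (f x) ^ 2)) by ring.
    rewrite H1. field. lra.
Qed.
Lemma D_ln_cosh f x l : derivable_pt_lim f x l ->
  derivable_pt_lim (fun y => ln (cosh (f y))) x (l * tanh (f x)).
Proof.
  intros. pose proof (cosh_pos (f x)). eapply D_eq.
  apply (D_comp (fun y => cosh (f y)) ln); [apply D_cosh; eauto | apply derivable_pt_lim_ln; auto].
  unfold tanh. field. lra.
Qed.
Lemma D_atan_sinh f x l : derivable_pt_lim f x l ->
  derivable_pt_lim (fun y => atan (sinh (f y))) x (l * sech (f x)).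
Proof.
  intros. pose proof (cosh_pos (f x)). pose proof (cosh_sinh (f x)). eapply D_eq.
  apply (D_comp (fun y => sinh (f y)) atan); [apply D_sinh; eauto | apply derivable_pt_lim_atan].
  unfold sech. replace (1 + sinh (f x) ^ 2) with (cosh (f x) ^ 2) by lra. field. lra.
Qed.

Lemma C_tanh : continuity tanh.
Proof. apply (C_of_D _ (fun y => 1 / cosh y ^ 2)). intro x. apply (D_tanh (fun y => y)), derivable_pt_lim_id. Qed.
Lemma C_sech : continuity sech.
Proof.
  apply (continuity_inv cosh); [apply derivable_continuous, derivable_cosh|].
  intro x; pose proof (cosh_pos x); lra.
Qed.

(* The two overlap kernels at scale k, centred at -a and a; with
   k = B/eps they are the factors multiplying eta_eps^2 in f_tanh, f_sech. *)
Definition tanh_kernel (k a x : R) : R :=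
  tanh (k * (x + a)) * sech (k * (x - a)) ^ 2 - tanh (k * (x - a)) * sech (k * (x + a)) ^ 2.
Definition sech_kernel (k a x : R) : R :=
  sech (k * (x + a)) ^ 2 * sech (k * (x - a)) ^ 2.
(* An auxiliary kernel, used to dominate cosh(2kx) * sech_kernel. *)
Definition sech_product (k a x : R) : R := sech (k * (x + a)) * sech (k * (x - a)).

(* Building blocks of the primitives: both are odd in x and tend to 2ka and 2
   respectively as x -> +oo. *)
Definition log_cosh_diff (k a x : R) : R := ln (cosh (k * (x + a))) - ln (cosh (k * (x - a))).
Definition tanh_sum (k a x : R) : R := tanh (k * (x + a)) + tanh (k * (x - a)).

Definition tanh_kernel_primitive (k a x : R) : R :=
  2 / k * (- log_cosh_diff k a x / sinh (2 * k * a) ^ 2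
           + cosh (2 * k * a) / sinh (2 * k * a) * tanh_sum k a x / 2).
Definition sech_kernel_primitive (k a x : R) : R :=
  2 / (k * sinh (2 * k * a) ^ 2)
  * (cosh (2 * k * a) / sinh (2 * k * a) * log_cosh_diff k a x - tanh_sum k a x / 2).
Definition sech_product_primitive (k a x : R) : R :=
  / (k * sinh (2 * k * a)) * log_cosh_diff k a x.

Lemma exp_shift k a x : exp (k * (x + a)) = exp (2 * k * a) * exp (k * (x - a)).
Proof. rewrite <- exp_plus. f_equal. ring. Qed.

Lemma exp_2ka_gt_1 k a : 0 < k -> 0 < a -> 1 < exp (2 * k * a).
Proof. intros. rewrite <- exp_0. apply exp_increasing. nra. Qed.

Lemma sinh_2ka_pos k a : 0 < k -> 0 < a -> 0 < sinh (2 * k * a).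
Proof.
  intros. rewrite sinh_exp. pose proof (exp_2ka_gt_1 k a H H0).
  assert (/ exp (2 * k * a) < 1) by (rewrite <- Rinv_1; apply Rinv_lt_contravar; lra). lra.
Qed.

Lemma D_log_cosh_diff k a x :
  derivable_pt_lim (log_cosh_diff k a) x (k * tanh (k * (x + a)) - k * tanh (k * (x - a))).
Proof.
  apply (D_minus (fun y => ln (cosh (k * (y + a)))) (fun y => ln (cosh (k * (y - a))))).
  - apply (D_ln_cosh (fun y => k * (y + a))), D_affine_plus.
  - apply (D_ln_cosh (fun y => k * (y - a))), D_affine_minus.
Qed.

Lemma D_tanh_sum k a x :
  derivable_pt_lim (tanh_sum k a) x (k / cosh (k * (x + a)) ^ 2 + k / cosh (k * (x - a)) ^ 2).
Proof.
  apply (D_plus (fun y => tanh (k * (y + a))) (fun y => tanh (k * (y - a)))).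
  - apply (D_tanh (fun y => k * (y + a))), D_affine_plus.
  - apply (D_tanh (fun y => k * (y - a))), D_affine_minus.
Qed.

(* Writing everything through E = e^{2ka} and v = e^{k(x-a)}, the primitive
   identities below become rational identities in E and v. *)
Ltac to_exp_rational k a x Hk Ha :=
  unfold tanh, sech in *; rewrite ?cosh_exp, ?sinh_exp in *; rewrite !exp_shift;
  pose proof (exp_2ka_gt_1 k a Hk Ha); pose proof (exp_pos (k * (x - a)));
  set (E := exp (2 * k * a)) in *; set (v := exp (k * (x - a))) in *;
  field; repeat split; try lra; nra.

Lemma primitive_tanh_kernel k a : 0 < k -> 0 < a ->
  primitive (tanh_kernel_primitive k a) (tanh_kernel k a).
Proof.
  intros Hk Ha. split.
  - intro x. eapply D_eq.
    + apply D_scal, D_plus.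
      * apply (D_divc (fun y => - log_cosh_diff k a y)), D_opp, D_log_cosh_diff.
      * apply (D_divc (fun y => cosh (2 * k * a) / sinh (2 * k * a) * tanh_sum k a y)),
          D_scal, D_tanh_sum.
    + unfold tanh_kernel. to_exp_rational k a x Hk Ha.
  - apply C_minus; apply C_mult; try apply C_pow2;
      first [apply C_affine_plus | apply C_affine_minus]; first [apply C_tanh | apply C_sech].
Qed.

Lemma primitive_sech_kernel k a : 0 < k -> 0 < a ->
  primitive (sech_kernel_primitive k a) (sech_kernel k a).
Proof.
  intros Hk Ha. split.
  - intro x. eapply D_eq.
    + apply D_scal, D_minus; [apply D_scal, D_log_cosh_diff | apply (D_divc (tanh_sum k a)), D_tanh_sum].
    + unfold sech_kernel. to_exp_rational k a x Hk Ha.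
  - apply C_mult; apply C_pow2; first [apply C_affine_plus | apply C_affine_minus]; apply C_sech.
Qed.

Lemma primitive_sech_product k a : 0 < k -> 0 < a ->
  primitive (sech_product_primitive k a) (sech_product k a).
Proof.
  intros Hk Ha. split.
  - intro x. eapply D_eq; [apply D_scal, D_log_cosh_diff|].
    unfold sech_product. to_exp_rational k a x Hk Ha.
  - apply C_mult; first [apply C_affine_plus | apply C_affine_minus]; apply C_sech.
Qed.

Lemma log_cosh_diff_odd k a x : log_cosh_diff k a (- x) = - log_cosh_diff k a x.
Proof.
  unfold log_cosh_diff. replace (k * (- x + a)) with (- (k * (x - a))) by ring.
  replace (k * (- x - a)) with (- (k * (x + a))) by ring. rewrite !cosh_even. ring.
Qed.
Lemma tanh_sum_odd k a x : tanh_sum k a (- x) = - tanh_sum k a x.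
Proof.
  unfold tanh_sum. replace (k * (- x + a)) with (- (k * (x - a))) by ring.
  replace (k * (- x - a)) with (- (k * (x + a))) by ring. rewrite !tanh_odd. ring.
Qed.
Lemma tanh_sum_bound k a x : Rabs (tanh_sum k a x) <= 2.
Proof.
  unfold tanh_sum. eapply Rle_trans. apply Rabs_triang.
  pose proof (tanh_bound (k * (x + a))). pose proof (tanh_bound (k * (x - a))). lra.
Qed.

Lemma ln_ge_0 r : 1 <= r -> 0 <= ln r.
Proof. intros [H|H]; [left; rewrite <- ln_1; apply ln_increasing; lra | subst; rewrite ln_1; lra]. Qed.
Lemma ln_le_minus_1 r : 0 < r -> ln r <= r - 1.
Proof. intros. pose proof (exp_ineq1_le (ln r)). rewrite exp_ln in H0; lra. Qed.

Lemma exp_minus_twice y : exp (- (2 * y)) = / exp y ^ 2.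
Proof. rewrite exp_Ropp. f_equal. simpl. rewrite Rmult_1_r, <- exp_plus. f_equal; ring. Qed.

Lemma log_cosh_diff_tail k a x : 0 < k -> 0 < a -> a <= x ->
  0 <= 2 * k * a - log_cosh_diff k a x <= exp (- (2 * (k * (x - a)))).
Proof.
  intros Hk Ha Hx. rewrite exp_minus_twice.
  pose proof (exp_2ka_gt_1 k a Hk Ha).
  assert (Hv : 1 <= exp (k * (x - a))) by (rewrite <- exp_0; apply exp_monotone; nra).
  unfold log_cosh_diff. rewrite !cosh_exp, exp_shift.
  replace (2 * k * a) with (ln (exp (2 * k * a))) by apply ln_exp.
  set (E := exp (2 * k * a)) in *. set (v := exp (k * (x - a))) in *.
  assert (0 < / (E * v)) by (apply Rinv_0_lt_compat; nra).
  assert (0 < / v) by (apply Rinv_0_lt_compat; nra).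
  assert (Hratio : ln E - (ln ((E * v + / (E * v)) / 2) - ln ((v + / v) / 2)) =
                   ln (E ^ 2 * (v ^ 2 + 1) / (E ^ 2 * v ^ 2 + 1))).
  { replace (E ^ 2 * (v ^ 2 + 1) / (E ^ 2 * v ^ 2 + 1)) with
      (E * ((v + / v) / 2) * / ((E * v + / (E * v)) / 2)) by (field; repeat split; nra).
    rewrite ln_mult, ln_mult, ln_Rinv; try lra; try nra.
    apply Rinv_0_lt_compat; nra. }
  rewrite exp_ln by lra. rewrite Hratio. split.
  - apply ln_ge_0. apply (Rmult_le_reg_r (E ^ 2 * v ^ 2 + 1)); [nra|].
    unfold Rdiv. rewrite Rmult_assoc, Rinv_l by nra. nra.
  - eapply Rle_trans; [apply ln_le_minus_1, Rdiv_lt_0_compat; nra|].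
    replace (E ^ 2 * (v ^ 2 + 1) / (E ^ 2 * v ^ 2 + 1) - 1)
      with ((E ^ 2 - 1) / (E ^ 2 * v ^ 2 + 1)) by (field; nra).
    apply (Rmult_le_reg_r ((E ^ 2 * v ^ 2 + 1) * v ^ 2)); [nra|].
    replace ((E ^ 2 - 1) / (E ^ 2 * v ^ 2 + 1) * ((E ^ 2 * v ^ 2 + 1) * v ^ 2))
      with ((E ^ 2 - 1) * v ^ 2) by (field; nra).
    replace (/ v ^ 2 * ((E ^ 2 * v ^ 2 + 1) * v ^ 2)) with (E ^ 2 * v ^ 2 + 1) by (field; nra).
    nra.
Qed.

Lemma tanh_sum_tail k a x : 0 < k -> 0 < a -> a <= x ->
  0 <= 2 - tanh_sum k a x <= 4 * exp (- (2 * (k * (x - a)))).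
Proof.
  intros Hk Ha Hx. rewrite exp_minus_twice.
  pose proof (exp_2ka_gt_1 k a Hk Ha).
  assert (Hv : 1 <= exp (k * (x - a))) by (rewrite <- exp_0; apply exp_monotone; nra).
  unfold tanh_sum.
  replace (2 - (tanh (k * (x + a)) + tanh (k * (x - a)))) with
    ((1 - tanh (k * (x + a))) + (1 - tanh (k * (x - a)))) by ring.
  rewrite !one_minus_tanh, exp_shift.
  set (E := exp (2 * k * a)) in *. set (v := exp (k * (x - a))) in *.
  assert (0 < 2 / ((E * v) ^ 2 + 1)) by (apply Rdiv_lt_0_compat; nra).
  assert (0 < 2 / (v ^ 2 + 1)) by (apply Rdiv_lt_0_compat; nra).
  assert (v ^ 2 <= (E * v) ^ 2) by (apply pow_incr; nra).
  assert (2 / ((E * v) ^ 2 + 1) <= 2 / v ^ 2).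
  { unfold Rdiv. apply Rmult_le_compat_l; [lra|]. apply Rinv_le_contravar; nra. }
  assert (2 / (v ^ 2 + 1) <= 2 / v ^ 2).
  { unfold Rdiv. apply Rmult_le_compat_l; [lra|]. apply Rinv_le_contravar; nra. }
  replace (4 * / v ^ 2) with (2 / v ^ 2 + 2 / v ^ 2) by (field; nra). lra.
Qed.

Lemma exponential_rate_limit (F : R -> R) V K k a : 0 < k -> 0 <= K ->
  (forall M, a <= M -> Rabs (F M - V) <= K * exp (- (2 * (k * (M - a))))) ->
  forall e, 0 < e -> exists M0, forall M, M0 <= M -> Rabs (F M - V) < e.
Proof.
  intros Hk HK H e he.
  destruct (exp_decay_eventually (K * exp (2 * k * a)) (2 * k) e) as [X HX]; try lra.
  { apply Rmult_le_pos; [lra | left; apply exp_pos]. }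
  exists (Rmax X a). intros M HM.
  eapply Rle_lt_trans; [apply H; eapply Rle_trans; [apply Rmax_r | apply HM]|].
  replace (exp (- (2 * (k * (M - a))))) with (exp (2 * k * a) * exp (- (2 * k * M)))
    by (rewrite <- exp_plus; f_equal; ring).
  rewrite <- Rmult_assoc. apply HX. eapply Rle_trans; [apply Rmax_l | apply HM].
Qed.

Lemma tanh_kernel_window k a M : 0 < k -> 0 < a -> a <= M ->
  let sh := sinh (2 * k * a) in let ch := cosh (2 * k * a) in
  Rabs (tanh_kernel_primitive k a M - tanh_kernel_primitive k a (- M)
        - 4 / k * (ch / sh - 2 * k * a / sh ^ 2))
  <= 4 / k * (1 / sh ^ 2 + 2 * ch / sh) * exp (- (2 * (k * (M - a)))).
Proof.
  intros Hk Ha HM sh ch.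
  pose proof (log_cosh_diff_tail k a M Hk Ha HM). pose proof (tanh_sum_tail k a M Hk Ha HM).
  assert (Hsh : 0 < sh) by (apply sinh_2ka_pos; auto).
  assert (Hch : 0 < ch) by apply cosh_pos.
  unfold tanh_kernel_primitive. rewrite log_cosh_diff_odd, tanh_sum_odd. fold sh ch.
  set (ex := exp (- (2 * (k * (M - a))))) in *.
  set (L := log_cosh_diff k a M) in *. set (T := tanh_sum k a M) in *.
  replace (2 / k * (- L / sh ^ 2 + ch / sh * T / 2) - 2 / k * (- - L / sh ^ 2 + ch / sh * - T / 2)
           - 4 / k * (ch / sh - 2 * k * a / sh ^ 2))
    with (4 / k * ((2 * k * a - L) / sh ^ 2 - ch / sh * (2 - T) / 2)) by (field; lra).
  assert (0 < / k) by (apply Rinv_0_lt_compat; lra).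
  assert (0 < / sh) by (apply Rinv_0_lt_compat; lra).
  assert (0 < / sh ^ 2) by (apply Rinv_0_lt_compat, pow_lt; lra).
  assert (0 <= (2 * k * a - L) / sh ^ 2 <= ex / sh ^ 2)
    by (unfold Rdiv; split; [apply Rmult_le_pos | apply Rmult_le_compat_r]; lra).
  assert (0 < ch / sh) by (apply Rdiv_lt_0_compat; lra).
  assert (0 <= ch / sh * (2 - T) / 2 <= 2 * ch / sh * ex) by (unfold Rdiv in *; split; nra).
  rewrite Rabs_mult, (Rabs_pos_eq (4 / k)) by (unfold Rdiv; nra).
  rewrite (Rmult_assoc (4 / k)). apply Rmult_le_compat_l; [unfold Rdiv; nra|].
  apply Rabs_le. unfold Rdiv in *. split; nra.
Qed.

Lemma integral_tanh_kernel k a : 0 < k -> 0 < a ->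
  improper_integral (tanh_kernel k a)
    (4 / k * (cosh (2 * k * a) / sinh (2 * k * a) - 2 * k * a / sinh (2 * k * a) ^ 2)).
Proof.
  intros Hk Ha. apply (improper_integral_primitive (tanh_kernel_primitive k a));
    [apply primitive_tanh_kernel; auto|].
  eapply (exponential_rate_limit _ _ _ k a Hk).
  2: { intros M HM. apply tanh_kernel_window; auto. }
  pose proof (sinh_2ka_pos k a Hk Ha). pose proof (cosh_pos (2 * k * a)).
  left. apply Rmult_lt_0_compat; [apply Rdiv_lt_0_compat; lra|].
  apply Rplus_lt_0_compat; apply Rdiv_lt_0_compat; try apply pow_lt; lra.
Qed.

Lemma sech_kernel_window k a M : 0 < k -> 0 < a -> a <= M ->
  let sh := sinh (2 * k * a) in let ch := cosh (2 * k * a) in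
  Rabs (sech_kernel_primitive k a M - sech_kernel_primitive k a (- M)
        - 4 / (k * sh ^ 2) * (2 * k * a * ch / sh - 1))
  <= 4 / (k * sh ^ 2) * (ch / sh + 2) * exp (- (2 * (k * (M - a)))).
Proof.
  intros Hk Ha HM sh ch.
  pose proof (log_cosh_diff_tail k a M Hk Ha HM). pose proof (tanh_sum_tail k a M Hk Ha HM).
  assert (Hsh : 0 < sh) by (apply sinh_2ka_pos; auto).
  assert (Hch : 0 < ch) by apply cosh_pos.
  unfold sech_kernel_primitive. rewrite log_cosh_diff_odd, tanh_sum_odd. fold sh ch.
  set (ex := exp (- (2 * (k * (M - a))))) in *.
  set (L := log_cosh_diff k a M) in *. set (T := tanh_sum k a M) in *.
  assert (Hks : 0 < k * sh ^ 2) by (apply Rmult_lt_0_compat; [lra | apply pow_lt; lra]).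
  replace (2 / (k * sh ^ 2) * (ch / sh * L - T / 2) - 2 / (k * sh ^ 2) * (ch / sh * - L - - T / 2)
           - 4 / (k * sh ^ 2) * (2 * k * a * ch / sh - 1))
    with (4 / (k * sh ^ 2) * ((2 - T) / 2 - ch / sh * (2 * k * a - L))) by (field; lra).
  assert (0 < / sh) by (apply Rinv_0_lt_compat; lra).
  assert (0 < / (k * sh ^ 2)) by (apply Rinv_0_lt_compat; lra).
  assert (0 <= ch / sh * (2 * k * a - L) <= ch / sh * ex)
    by (unfold Rdiv; split; [apply Rmult_le_pos | apply Rmult_le_compat_l]; nra).
  rewrite Rabs_mult, (Rabs_pos_eq (4 / (k * sh ^ 2))) by (unfold Rdiv; nra).
  rewrite (Rmult_assoc (4 / (k * sh ^ 2))). apply Rmult_le_compat_l; [unfold Rdiv; nra|].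
  apply Rabs_le. unfold Rdiv in *. split; nra.
Qed.

Lemma integral_sech_kernel k a : 0 < k -> 0 < a ->
  improper_integral (sech_kernel k a)
    (4 / (k * sinh (2 * k * a) ^ 2) * (2 * k * a * cosh (2 * k * a) / sinh (2 * k * a) - 1)).
Proof.
  intros Hk Ha. apply (improper_integral_primitive (sech_kernel_primitive k a));
    [apply primitive_sech_kernel; auto|].
  eapply (exponential_rate_limit _ _ _ k a Hk).
  2: { intros M HM. apply sech_kernel_window; auto. }
  pose proof (sinh_2ka_pos k a Hk Ha). pose proof (cosh_pos (2 * k * a)).
  left. apply Rmult_lt_0_compat.
  - apply Rdiv_lt_0_compat; [lra | apply Rmult_lt_0_compat; [lra | apply pow_lt; lra]].
  - assert (0 < cosh (2 * k * a) / sinh (2 * k * a)) by (apply Rdiv_lt_0_compat; lra). lra.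
Qed.

Lemma primitive_lin F f G g al ga : primitive F f -> primitive G g ->
  primitive (fun x => al * F x + ga * G x) (fun x => al * f x + ga * g x).
Proof.
  intros [HF HFc] [HG HGc]. split.
  - intro x. apply D_plus; apply D_scal; auto.
  - apply C_plus; apply C_mult; auto; apply C_const.
Qed.

(* The majorant d (sech^2 + sech^2) + b (sech + sech) of both kernels and of
   their products with |x^2 - a^2|, together with its primitive. *)
Definition sech_majorant (k a d b x : R) : R :=
  d * (sech (k * (x + a)) ^ 2 + sech (k * (x - a)) ^ 2)
  + b * (sech (k * (x + a)) + sech (k * (x - a))).
Definition sech_majorant_primitive (k a d b x : R) : R :=
  d / k * tanh_sum k a x + b / k * (atan (sinh (k * (x + a))) + atan (sinh (k * (x - a)))).

Lemma primitive_sech_majorant k a d b : 0 < k ->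
  primitive (sech_majorant_primitive k a d b) (sech_majorant k a d b).
Proof.
  intros Hk. split.
  - intro x. eapply D_eq.
    + apply D_plus; apply D_scal; [apply D_tanh_sum | apply D_plus].
      * apply (D_atan_sinh (fun y => k * (y + a))), D_affine_plus.
      * apply (D_atan_sinh (fun y => k * (y - a))), D_affine_minus.
    + unfold sech_majorant, sech.
      pose proof (cosh_pos (k * (x + a))). pose proof (cosh_pos (k * (x - a))). field. lra.
  - unfold sech_majorant. apply C_plus; apply C_mult; try apply C_const; apply C_plus;
      try apply C_pow2; first [apply C_affine_plus | apply C_affine_minus]; apply C_sech.
Qed.

Lemma sech_majorant_primitive_odd k a d b x :
  sech_majorant_primitive k a d b (- x) = - sech_majorant_primitive k a d b x.
Proof.
  unfold sech_majorant_primitive. rewrite tanh_sum_odd.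
  replace (k * (- x + a)) with (- (k * (x - a))) by ring.
  replace (k * (- x - a)) with (- (k * (x + a))) by ring.
  rewrite !sinh_odd, !atan_opp. ring.
Qed.

Lemma Rabs_le_inv x b : Rabs x <= b -> - b <= x <= b.
Proof. unfold Rabs. destruct (Rcase_abs x); lra. Qed.

Lemma sech_majorant_mass k a d b M : 0 < k -> 0 <= d -> 0 <= b ->
  sech_majorant_primitive k a d b M - sech_majorant_primitive k a d b (- M)
  <= 4 * d / k + 2 * PI * b / k.
Proof.
  intros Hk Hd Hb. rewrite sech_majorant_primitive_odd. unfold sech_majorant_primitive.
  pose proof (Rabs_le_inv _ _ (tanh_sum_bound k a M)).
  pose proof (atan_bound (sinh (k * (M + a)))). pose proof (atan_bound (sinh (k * (M - a)))).
  assert (0 <= d / k) by (unfold Rdiv; apply Rmult_le_pos; [lra | left; apply Rinv_0_lt_compat; lra]).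
  assert (0 <= b / k) by (unfold Rdiv; apply Rmult_le_pos; [lra | left; apply Rinv_0_lt_compat; lra]).
  replace (4 * d / k) with (d / k * 4) by (field; lra).
  replace (2 * PI * b / k) with (b / k * (2 * PI)) by (field; lra).
  assert (d / k * tanh_sum k a M <= d / k * 2) by (apply Rmult_le_compat_l; lra).
  assert (b / k * (atan (sinh (k * (M + a))) + atan (sinh (k * (M - a)))) <= b / k * PI)
    by (apply Rmult_le_compat_l; lra).
  lra.
Qed.

Lemma sech_majorant_tail k a d M M' : 0 < k -> 0 < a -> 0 <= d -> a <= M -> M <= M' ->
  (sech_majorant_primitive k a d 0 M' - sech_majorant_primitive k a d 0 M)
  + (sech_majorant_primitive k a d 0 (- M) - sech_majorant_primitive k a d 0 (- M'))
  <= 8 * d / k * exp (- (2 * (k * (M - a)))).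
Proof.
  intros Hk Ha Hd HM HM'. rewrite !sech_majorant_primitive_odd. unfold sech_majorant_primitive.
  pose proof (tanh_sum_tail k a M Hk Ha HM). pose proof (tanh_sum_tail k a M' Hk Ha ltac:(lra)).
  assert (0 <= d / k) by (unfold Rdiv; apply Rmult_le_pos; [lra | left; apply Rinv_0_lt_compat; lra]).
  replace (0 / k) with 0 by (field; lra).
  replace (8 * d / k * exp (- (2 * (k * (M - a)))))
    with (2 * (d / k) * (4 * exp (- (2 * (k * (M - a)))))) by (field; lra).
  apply Rle_trans with (2 * (d / k) * (tanh_sum k a M' - tanh_sum k a M)); [lra|].
  apply Rmult_le_compat_l; lra.
Qed.

Lemma cosh_abs z : cosh z = cosh (Rabs z).
Proof.
  destruct (Rle_dec 0 z); [rewrite Rabs_pos_eq | rewrite Rabs_left, cosh_even]; auto; lra.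
Qed.
Lemma cosh_ge_half_exp t : exp t / 2 <= cosh t.
Proof. unfold cosh. pose proof (exp_pos (- t)). lra. Qed.
Lemma exp_ge_square t : 0 <= t -> (1 + t / 2) ^ 2 <= exp t.
Proof.
  intros. replace (exp t) with (exp (t / 2) ^ 2).
  - pose proof (exp_ineq1_le (t / 2)). apply pow_incr. lra.
  - simpl. rewrite Rmult_1_r, <- exp_plus. f_equal; field.
Qed.
Lemma exp_ge_quadratic t : 0 <= t -> 3 * t ^ 2 / 8 <= exp t.
Proof.
  intros. replace (exp t) with (exp (t / 4) ^ 4).
  - pose proof (exp_ineq1_le (t / 4)).
    assert ((1 + t / 4) ^ 4 <= exp (t / 4) ^ 4) by (apply pow_incr; lra). nra.
  - simpl. rewrite Rmult_1_r, <- !exp_plus. f_equal; field.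
Qed.
Lemma abs_le_cosh z : Rabs z <= cosh z.
Proof.
  rewrite cosh_abs. pose proof (Rabs_pos z). set (t := Rabs z) in *.
  pose proof (exp_ge_square t H). pose proof (cosh_ge_half_exp t).
  pose proof (pow2_ge_0 (1 - t / 2)). nra.
Qed.
Lemma square_le_cosh z : z ^ 2 <= 6 * cosh z.
Proof.
  rewrite cosh_abs, <- pow2_abs. pose proof (Rabs_pos z). set (t := Rabs z) in *.
  pose proof (exp_ge_quadratic t H). pose proof (cosh_ge_half_exp t). nra.
Qed.

Lemma tanh_kernel_bound k a x :
  Rabs (tanh_kernel k a x) <= sech (k * (x + a)) ^ 2 + sech (k * (x - a)) ^ 2.
Proof.
  unfold tanh_kernel. eapply Rle_trans; [apply Rabs_triang|]. rewrite Rabs_Ropp, !Rabs_mult.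
  rewrite !(Rabs_pos_eq (sech _ ^ 2)) by apply pow2_ge_0.
  pose proof (tanh_bound (k * (x + a))). pose proof (tanh_bound (k * (x - a))).
  pose proof (pow2_ge_0 (sech (k * (x + a)))). pose proof (pow2_ge_0 (sech (k * (x - a)))). nra.
Qed.

Lemma sech_kernel_nonneg k a x : 0 <= sech_kernel k a x.
Proof. unfold sech_kernel. apply Rmult_le_pos; apply pow2_ge_0. Qed.

Lemma sech_kernel_bound k a x :
  Rabs (sech_kernel k a x) <= sech (k * (x + a)) ^ 2 + sech (k * (x - a)) ^ 2.
Proof.
  rewrite Rabs_pos_eq by apply sech_kernel_nonneg. unfold sech_kernel.
  pose proof (sech_pos (k * (x - a))). pose proof (sech_le_1 (k * (x - a))).
  assert (sech (k * (x - a)) ^ 2 <= 1) by (simpl; nra).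
  pose proof (pow2_ge_0 (sech (k * (x + a)))). pose proof (pow2_ge_0 (sech (k * (x - a)))). nra.
Qed.

(* Near the kink at -s (s = ±a) the defect |x^2 - a^2| = |x + s| |x - s|
   is absorbed by one power of sech: sech^2 times the defect is at most
   (6/k^2 + 2a/k) sech. *)
Lemma defect_sech_sq_bound k a s x : 0 < k -> s ^ 2 = a ^ 2 -> 0 <= a ->
  Rabs (x ^ 2 - a ^ 2) * sech (k * (x + s)) ^ 2 <= (6 / k ^ 2 + 2 * a / k) * sech (k * (x + s)).
Proof.
  intros Hk Hs Ha. set (z := k * (x + s)).
  assert (Hsa : Rabs s = a).
  { rewrite <- (Rabs_pos_eq a) by lra. rewrite <- !sqrt_Rsqr_abs. f_equal. unfold Rsqr; nra. }
  assert (Hik : 0 < / k) by (apply Rinv_0_lt_compat; lra).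
  assert (Hdefect : Rabs (x ^ 2 - a ^ 2) <= z ^ 2 / k ^ 2 + 2 * a * Rabs z / k).
  { replace (x ^ 2 - a ^ 2) with (z / k * (z / k - 2 * s)) by (unfold z; rewrite <- Hs; field; lra).
    rewrite Rabs_mult.
    assert (A1 : Rabs (z / k) = Rabs z * / k)
      by (unfold Rdiv; rewrite Rabs_mult, (Rabs_pos_eq (/ k)); lra).
    assert (A2 : Rabs (z / k - 2 * s) <= Rabs z * / k + 2 * a).
    { eapply Rle_trans; [apply Rabs_triang|].
      rewrite Rabs_Ropp, A1, Rabs_mult, Hsa, (Rabs_pos_eq 2); lra. }
    rewrite A1. pose proof (Rabs_pos z).
    eapply Rle_trans; [apply Rmult_le_compat_l; [nra | apply A2]|].
    rewrite <- (pow2_abs z). right. field. lra. }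
  pose proof (sech_pos z). pose proof (cosh_pos z). pose proof (pow2_ge_0 (sech z)).
  assert (C1 : z ^ 2 * sech z ^ 2 <= 6 * sech z).
  { pose proof (square_le_cosh z). unfold sech in *.
    replace (z ^ 2 * (/ cosh z) ^ 2) with (z ^ 2 / cosh z * / cosh z) by (field; lra).
    apply Rmult_le_compat_r; [lra|]. apply (Rmult_le_reg_r (cosh z)); [lra|].
    unfold Rdiv. rewrite Rmult_assoc, Rinv_l; lra. }
  assert (C2 : Rabs z * sech z ^ 2 <= sech z).
  { pose proof (abs_le_cosh z). unfold sech in *.
    replace (Rabs z * (/ cosh z) ^ 2) with (Rabs z / cosh z * / cosh z) by (field; lra).
    rewrite <- (Rmult_1_l (/ cosh z)) at 2.
    apply Rmult_le_compat_r; [lra|]. apply (Rmult_le_reg_r (cosh z)); [lra|].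
    unfold Rdiv. rewrite Rmult_assoc, Rinv_l; lra. }
  eapply Rle_trans; [apply Rmult_le_compat_r; [auto | apply Hdefect]|].
  replace ((z ^ 2 / k ^ 2 + 2 * a * Rabs z / k) * sech z ^ 2)
    with (/ k ^ 2 * (z ^ 2 * sech z ^ 2) + 2 * a / k * (Rabs z * sech z ^ 2)) by (field; lra).
  replace ((6 / k ^ 2 + 2 * a / k) * sech z) with (/ k ^ 2 * (6 * sech z) + 2 * a / k * sech z)
    by (field; lra).
  assert (0 < / k ^ 2) by (apply Rinv_0_lt_compat, pow_lt; lra).
  assert (0 <= 2 * a / k) by (unfold Rdiv; nra).
  apply Rplus_le_compat; apply Rmult_le_compat_l; lra.
Qed.

(* For c >= 2, y^2 <= c^2 + 2 c^2 e^{-c} cosh y: the square is controlled by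
   c^2 inside [-c, c] and by the exponential growth of cosh outside. *)
Lemma square_le_cosh_beyond c y : 2 <= c -> y ^ 2 <= c ^ 2 + 2 * c ^ 2 * exp (- c) * cosh y.
Proof.
  intros Hc. rewrite cosh_abs, <- pow2_abs.
  pose proof (Rabs_pos y). set (t := Rabs y) in *.
  pose proof (cosh_pos t). pose proof (exp_pos (- c)). pose proof (pow2_ge_0 c).
  assert (0 <= 2 * c ^ 2 * exp (- c) * cosh t)
    by (apply Rmult_le_pos; [apply Rmult_le_pos; [apply Rmult_le_pos|]|]; lra).
  destruct (Rle_dec t c).
  - assert (t ^ 2 <= c ^ 2) by (apply pow_incr; lra). lra.
  - set (d := t - c). assert (Hd : 0 <= d) by (unfold d; lra).
    assert (Ht2 : t ^ 2 <= c ^ 2 * (1 + d / 2) ^ 2).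
    { replace t with (c + d) by (unfold d; ring). apply (Rmult_le_reg_r 4); [lra|].
      replace (c ^ 2 * (1 + d / 2) ^ 2 * 4) with ((2 * c + c * d) ^ 2) by field.
      replace ((c + d) ^ 2 * 4) with ((2 * c + 2 * d) ^ 2) by ring. apply pow_incr. nra. }
    assert (Hed : exp d = exp t * exp (- c)) by (rewrite <- exp_plus; f_equal; unfold d; ring).
    pose proof (exp_ge_square d Hd). pose proof (cosh_ge_half_exp t).
    assert (c ^ 2 * (1 + d / 2) ^ 2 <= c ^ 2 * (exp t * exp (- c)))
      by (rewrite <- Hed; apply Rmult_le_compat_l; lra).
    assert (exp t * exp (- c) <= 2 * cosh t * exp (- c)) by (apply Rmult_le_compat_r; lra).
    assert (c ^ 2 * (exp t * exp (- c)) <= c ^ 2 * (2 * cosh t * exp (- c)))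
      by (apply Rmult_le_compat_l; lra).
    lra.
Qed.

Lemma defect_le_cosh k a x : 0 < k -> 2 <= 2 * k * a ->
  Rabs (x ^ 2 - a ^ 2)
  <= (2 * k * a) ^ 2 / (2 * k ^ 2) + (2 * k * a) ^ 2 * exp (- (2 * k * a)) / (2 * k ^ 2) * cosh (2 * k * x).
Proof.
  intros Hk Hc. set (c := 2 * k * a) in *.
  pose proof (square_le_cosh_beyond c (2 * k * x) Hc).
  pose proof (pow2_ge_0 (2 * k * x)). pose proof (pow2_ge_0 c).
  replace (x ^ 2 - a ^ 2) with (((2 * k * x) ^ 2 - c ^ 2) * / (4 * k ^ 2)) by (unfold c; field; lra).
  rewrite Rabs_mult, (Rabs_pos_eq (/ (4 * k ^ 2))) by (left; apply Rinv_0_lt_compat; nra).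
  apply (Rmult_le_reg_r (4 * k ^ 2)); [nra|].
  rewrite Rmult_assoc, Rinv_l, Rmult_1_r by nra.
  eapply Rle_trans; [apply Rabs_triang|]. rewrite Rabs_Ropp, !Rabs_pos_eq by auto.
  replace ((c ^ 2 / (2 * k ^ 2) + c ^ 2 * exp (- c) / (2 * k ^ 2) * cosh (2 * k * x)) * (4 * k ^ 2))
    with (2 * c ^ 2 + 2 * c ^ 2 * exp (- c) * cosh (2 * k * x)) by (field; lra).
  lra.
Qed.

(* cosh(2kx) sech_kernel <= 2 sech_product: the growth of cosh(2kx) is
   compensated by one power of each sech. *)
Lemma cosh_sech_kernel_le k a x : cosh (2 * k * x) * sech_kernel k a x <= 2 * sech_product k a x.
Proof.
  unfold sech_kernel, sech_product, sech. rewrite !cosh_exp.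
  replace (exp (2 * k * x)) with (exp (k * (x + a)) * exp (k * (x - a)))
    by (rewrite <- exp_plus; f_equal; ring).
  pose proof (exp_pos (k * (x + a))). pose proof (exp_pos (k * (x - a))).
  set (u := exp (k * (x + a))) in *. set (v := exp (k * (x - a))) in *.
  apply (Rmult_le_reg_r ((u ^ 2 + 1) ^ 2 * (v ^ 2 + 1) ^ 2 / (u * v))).
  { apply Rdiv_lt_0_compat; [apply Rmult_lt_0_compat; apply pow_lt|]; nra. }
  replace ((u * v + / (u * v)) / 2 * ((/ ((u + / u) / 2)) ^ 2 * (/ ((v + / v) / 2)) ^ 2) *
     ((u ^ 2 + 1) ^ 2 * (v ^ 2 + 1) ^ 2 / (u * v)))
    with (8 * ((u * v) ^ 2 + 1)) by (field; repeat split; nra).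
  replace (2 * (/ ((u + / u) / 2) * / ((v + / v) / 2)) * ((u ^ 2 + 1) ^ 2 * (v ^ 2 + 1) ^ 2 / (u * v)))
    with (8 * (u ^ 2 + 1) * (v ^ 2 + 1)) by (field; repeat split; nra).
  nra.
Qed.

(* A weight w (in the application w = eta_eps^2) that is bounded and agrees
   with 1 - x^2, written as (1 - a^2) - (x^2 - a^2), up to an error d. *)
Definition admissible_weight (w : R -> R) (a d : R) : Prop :=
  continuity w /\ (forall x, Rabs (w x) <= 4) /\
  (forall x, Rabs (w x - (1 - a ^ 2)) <= d + Rabs (x ^ 2 - a ^ 2)).

Lemma weighted_kernel_integrable k a w d f : 0 < k -> 0 < a -> admissible_weight w a d ->
  continuity f -> (forall x, Rabs (f x) <= sech (k * (x + a)) ^ 2 + sech (k * (x - a)) ^ 2) ->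
  exists I, improper_integral (fun x => w x * f x) I.
Proof.
  intros Hk Ha [Hw [Hw4 _]] Hf Hfb.
  apply (improper_integral_exists _ (sech_majorant k a 4 0) (sech_majorant_primitive k a 4 0)).
  - apply C_mult; auto.
  - apply primitive_sech_majorant; auto.
  - intro x. unfold sech_majorant. rewrite Rabs_mult.
    pose proof (Hw4 x). pose proof (Hfb x). pose proof (Rabs_pos (w x)). pose proof (Rabs_pos (f x)).
    nra.
  - intros e he.
    destruct (exp_decay_eventually (32 / k * exp (2 * k * a)) (2 * k) e) as [Y HY]; try lra.
    { apply Rmult_le_pos; [apply Rlt_le, Rdiv_lt_0_compat | apply Rlt_le, exp_pos]; lra. }
    exists (Rmax Y a). intros M M' HM HM'.
    pose proof (Rmax_l Y a). pose proof (Rmax_r Y a).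
    eapply Rle_lt_trans; [apply sech_majorant_tail; lra|].
    replace (8 * 4 / k * exp (- (2 * (k * (M - a)))))
      with (32 / k * exp (2 * k * a) * exp (- (2 * k * M)))
      by (rewrite Rmult_assoc, <- exp_plus; replace (2 * k * a + - (2 * k * M))
            with (- (2 * (k * (M - a)))) by ring; field; lra).
    apply HY. lra.
Qed.

Lemma weighted_tanh_kernel_integral k a w d : 0 < k -> 0 < a -> 0 <= d ->
  admissible_weight w a d ->
  exists I, improper_integral (fun x => w x * tanh_kernel k a x) I /\
    Rabs (I - (1 - a ^ 2) * (4 / k * (cosh (2 * k * a) / sinh (2 * k * a)
                                      - 2 * k * a / sinh (2 * k * a) ^ 2)))
    <= 4 * d / k + 2 * PI * (6 / k ^ 2 + 2 * a / k) / k.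
Proof.
  intros Hk Ha Hd Hw.
  destruct (weighted_kernel_integrable k a w d (tanh_kernel k a) Hk Ha Hw
              (proj2 (primitive_tanh_kernel k a Hk Ha)) (tanh_kernel_bound k a)) as [I HI].
  exists I. split; auto.
  pose proof (improper_integral_lin _ _ _ _ (- (1 - a ^ 2)) HI (integral_tanh_kernel k a Hk Ha)) as Hdiff.
  match goal with |- Rabs (I - ?V) <= _ => replace (I - V) with (I + - V) by ring end.
  rewrite Ropp_mult_distr_l.
  assert (Hb : 0 <= 6 / k ^ 2 + 2 * a / k).
  { assert (0 < / k) by (apply Rinv_0_lt_compat; lra).
    assert (0 < / k ^ 2) by (apply Rinv_0_lt_compat, pow_lt; lra). unfold Rdiv; nra. }
  apply (improper_integral_abs_le _ _ (sech_majorant k a d (6 / k ^ 2 + 2 * a / k))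
           (sech_majorant_primitive k a d (6 / k ^ 2 + 2 * a / k)) _ 0 Hdiff).
  - apply primitive_sech_majorant; auto.
  - intro x. destruct Hw as [_ [_ Hwd]].
    replace (w x * tanh_kernel k a x + - (1 - a ^ 2) * tanh_kernel k a x)
      with ((w x - (1 - a ^ 2)) * tanh_kernel k a x) by ring.
    rewrite Rabs_mult.
    pose proof (Hwd x). pose proof (tanh_kernel_bound k a x).
    pose proof (Rabs_pos (w x - (1 - a ^ 2))). pose proof (Rabs_pos (tanh_kernel k a x)).
    pose proof (Rabs_pos (x ^ 2 - a ^ 2)).
    pose proof (defect_sech_sq_bound k a a x Hk eq_refl (Rlt_le _ _ Ha)).
    pose proof (defect_sech_sq_bound k a (- a) x Hk ltac:(ring) (Rlt_le _ _ Ha)) as Hm.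
    change (k * (x + - a)) with (k * (x - a)) in Hm.
    pose proof (pow2_ge_0 (sech (k * (x + a)))). pose proof (pow2_ge_0 (sech (k * (x - a)))).
    unfold sech_majorant.
    apply Rle_trans with ((d + Rabs (x ^ 2 - a ^ 2))
                          * (sech (k * (x + a)) ^ 2 + sech (k * (x - a)) ^ 2)).
    + apply Rmult_le_compat; auto.
    + nra.
  - intros M _. apply sech_majorant_mass; auto.
Qed.

Lemma sech_kernel_defect_le k a d w x : 0 < k -> 2 <= 2 * k * a ->
  Rabs (w x - (1 - a ^ 2)) <= d + Rabs (x ^ 2 - a ^ 2) ->
  Rabs ((w x - (1 - a ^ 2)) * sech_kernel k a x)
  <= (d + (2 * k * a) ^ 2 / (2 * k ^ 2)) * sech_kernel k a x
     + (2 * k * a) ^ 2 * exp (- (2 * k * a)) / k ^ 2 * sech_product k a x.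
Proof.
  intros Hk Hc Hw. set (c := 2 * k * a) in *.
  pose proof (sech_kernel_nonneg k a x). pose proof (cosh_sech_kernel_le k a x).
  pose proof (defect_le_cosh k a x Hk Hc). fold c in H1.
  assert (0 <= c ^ 2 * exp (- c) / (2 * k ^ 2)).
  { unfold Rdiv. pose proof (exp_pos (- c)). pose proof (pow2_ge_0 c).
    apply Rmult_le_pos; [apply Rmult_le_pos|]; [lra | lra | left; apply Rinv_0_lt_compat; nra]. }
  rewrite Rabs_mult, (Rabs_pos_eq (sech_kernel k a x)) by auto.
  apply Rle_trans with ((d + (c ^ 2 / (2 * k ^ 2) + c ^ 2 * exp (- c) / (2 * k ^ 2)
                                                   * cosh (2 * k * x))) * sech_kernel k a x).
  { apply Rmult_le_compat_r; lra. }
  replace (c ^ 2 * exp (- c) / k ^ 2 * sech_product k a x)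
    with (c ^ 2 * exp (- c) / (2 * k ^ 2) * (2 * sech_product k a x)) by (field; lra).
  assert (c ^ 2 * exp (- c) / (2 * k ^ 2) * (cosh (2 * k * x) * sech_kernel k a x)
          <= c ^ 2 * exp (- c) / (2 * k ^ 2) * (2 * sech_product k a x))
    by (apply Rmult_le_compat_l; auto).
  nra.
Qed.

Lemma sech_defect_majorant_mass k a al ga M : 0 < k -> 0 < a -> 0 <= al -> 0 <= ga -> a <= M ->
  let c := 2 * k * a in let sh := sinh c in let ch := cosh c in
  al * sech_kernel_primitive k a M + ga * sech_product_primitive k a M
  - (al * sech_kernel_primitive k a (- M) + ga * sech_product_primitive k a (- M))
  <= 2 * al * (2 / (k * sh ^ 2) * (ch / sh * c + 1)) + 2 * ga * (c / (k * sh)).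
Proof.
  intros Hk Ha Hal Hga HM c sh ch.
  pose proof (log_cosh_diff_tail k a M Hk Ha HM) as HL. change (2 * k * a) with c in HL.
  pose proof (Rabs_le_inv _ _ (tanh_sum_bound k a M)).
  assert (Hsh : 0 < sh) by (apply sinh_2ka_pos; auto).
  assert (Hch : 0 < ch) by apply cosh_pos.
  unfold sech_kernel_primitive, sech_product_primitive.
  rewrite log_cosh_diff_odd, tanh_sum_odd. fold c sh ch.
  set (L := log_cosh_diff k a M) in *. set (T := tanh_sum k a M) in *.
  assert (0 < / (k * sh ^ 2)) by (apply Rinv_0_lt_compat, Rmult_lt_0_compat; [lra | apply pow_lt; lra]).
  assert (0 < / (k * sh)) by (apply Rinv_0_lt_compat, Rmult_lt_0_compat; lra).
  assert (0 < ch / sh) by (apply Rdiv_lt_0_compat; lra).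
  assert (G1 : 2 / (k * sh ^ 2) * (ch / sh * L - T / 2) <= 2 / (k * sh ^ 2) * (ch / sh * c + 1)).
  { apply Rmult_le_compat_l; [unfold Rdiv; nra|].
    assert (ch / sh * L <= ch / sh * c) by (apply Rmult_le_compat_l; lra). lra. }
  assert (G2 : / (k * sh) * L <= c / (k * sh)).
  { unfold Rdiv. rewrite Rmult_comm. apply Rmult_le_compat_r; lra. }
  assert (al * (2 / (k * sh ^ 2) * (ch / sh * L - T / 2))
          <= al * (2 / (k * sh ^ 2) * (ch / sh * c + 1))) by (apply Rmult_le_compat_l; auto).
  assert (ga * (/ (k * sh) * L) <= ga * (c / (k * sh))) by (apply Rmult_le_compat_l; auto).
  replace (2 / (k * sh ^ 2) * (ch / sh * - L - - T / 2)) with (- (2 / (k * sh ^ 2) * (ch / sh * L - T / 2)))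
    by (unfold Rdiv; ring).
  replace (/ (k * sh) * - L) with (- (/ (k * sh) * L)) by ring.
  lra.
Qed.

Lemma weighted_sech_kernel_integral k a w d : 0 < k -> 0 < a -> 2 <= 2 * k * a -> 0 <= d ->
  admissible_weight w a d ->
  let c := 2 * k * a in let sh := sinh c in let ch := cosh c in
  exists I, improper_integral (fun x => w x * sech_kernel k a x) I /\
    Rabs (I - (1 - a ^ 2) * (4 / (k * sh ^ 2) * (c * ch / sh - 1)))
    <= 2 * (d + c ^ 2 / (2 * k ^ 2)) * (2 / (k * sh ^ 2) * (ch / sh * c + 1))
       + 2 * (c ^ 2 * exp (- c) / k ^ 2) * (c / (k * sh)).
Proof.
  intros Hk Ha Hc Hd Hw c sh ch.
  destruct (weighted_kernel_integrable k a w d (sech_kernel k a) Hk Ha Hw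
              (proj2 (primitive_sech_kernel k a Hk Ha)) (sech_kernel_bound k a)) as [I HI].
  exists I. split; auto.
  pose proof (improper_integral_lin _ _ _ _ (- (1 - a ^ 2)) HI (integral_sech_kernel k a Hk Ha)) as Hdiff.
  match goal with |- Rabs (I - ?V) <= _ => replace (I - V) with (I + - V) by ring end.
  rewrite Ropp_mult_distr_l.
  set (al := d + c ^ 2 / (2 * k ^ 2)). set (ga := c ^ 2 * exp (- c) / k ^ 2).
  pose proof (pow2_ge_0 c). pose proof (exp_pos (- c)).
  assert (0 < / k ^ 2) by (apply Rinv_0_lt_compat, pow_lt; lra).
  assert (Hal : 0 <= al) by (unfold al, Rdiv; rewrite Rinv_mult; nra).
  assert (Hga : 0 <= ga) by (unfold ga, Rdiv; apply Rmult_le_pos; [apply Rmult_le_pos|]; lra).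
  apply (improper_integral_abs_le _ _ (fun x => al * sech_kernel k a x + ga * sech_product k a x)
           (fun x => al * sech_kernel_primitive k a x + ga * sech_product_primitive k a x) _ a Hdiff).
  - apply primitive_lin; [apply primitive_sech_kernel | apply primitive_sech_product]; auto.
  - intro x. destruct Hw as [_ [_ Hwd]].
    replace (w x * sech_kernel k a x + - (1 - a ^ 2) * sech_kernel k a x)
      with ((w x - (1 - a ^ 2)) * sech_kernel k a x) by ring.
    apply sech_kernel_defect_le; auto.
  - intros M HM. apply sech_defect_majorant_mass; auto.
Qed.

(* For c >= 4 the quantity e^c is at least 16, which is all the asymptotics need. *)
Lemma exp_ge_16 c : 4 <= c -> 16 <= exp c.
Proof.
  intros Hc. pose proof (exp_ineq1_le 1).
  assert (exp 4 = exp 1 ^ 4) by (simpl; rewrite Rmult_1_r, <- !exp_plus; f_equal; ring).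
  assert (2 ^ 4 <= exp 1 ^ 4) by (apply pow_incr; lra).
  pose proof (exp_monotone 4 c Hc). simpl in *. lra.
Qed.

Lemma tanh_kernel_asymptotics c : 4 <= c ->
  Rabs (cosh c / sinh c - c / sinh c ^ 2 - 1) <= (4 + 16 * c) * exp (- (2 * c)).
Proof.
  intros Hc. rewrite exp_minus_twice, cosh_exp, sinh_exp.
  pose proof (exp_ge_16 c Hc). set (X := exp c) in *.
  set (Y := X ^ 2). assert (HY : 256 <= Y) by (unfold Y; nra).
  replace ((X + / X) / 2 / ((X - / X) / 2) - c / ((X - / X) / 2) ^ 2 - 1)
    with (2 / (Y - 1) - 4 * c * Y / (Y - 1) ^ 2) by (unfold Y; field; repeat split; nra).
  assert (0 < 2 / (Y - 1) <= 4 / Y).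
  { split; [apply Rdiv_lt_0_compat; lra|].
    apply (Rmult_le_reg_r ((Y - 1) * Y)); [nra|].
    replace (2 / (Y - 1) * ((Y - 1) * Y)) with (2 * Y) by (field; lra).
    replace (4 / Y * ((Y - 1) * Y)) with (4 * (Y - 1)) by (field; lra). lra. }
  assert (0 <= 4 * c * Y / (Y - 1) ^ 2 <= 16 * c / Y).
  { split; [apply Rmult_le_pos; [nra | left; apply Rinv_0_lt_compat; nra]|].
    apply (Rmult_le_reg_r ((Y - 1) ^ 2 * Y)); [nra|].
    replace (4 * c * Y / (Y - 1) ^ 2 * ((Y - 1) ^ 2 * Y)) with (4 * c * Y ^ 2) by (field; lra).
    replace (16 * c / Y * ((Y - 1) ^ 2 * Y)) with (16 * c * (Y - 1) ^ 2) by (field; lra).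
    assert (Y ^ 2 <= 4 * (Y - 1) ^ 2) by nra.
    assert (c * Y ^ 2 <= c * (4 * (Y - 1) ^ 2)) by (apply Rmult_le_compat_l; lra). lra. }
  replace ((4 + 16 * c) * / Y) with (4 / Y + 16 * c / Y) by (field; lra).
  apply Rabs_le. lra.
Qed.

Lemma tanh_overlap_relative k a d I V : 0 < k -> 0 < a -> a ^ 2 <= 1 / 4 -> 0 <= d ->
  Rabs (I - (1 - a ^ 2) * (4 / k * V)) <= 4 * d / k + 2 * PI * (6 / k ^ 2 + 2 * a / k) / k ->
  Rabs (I * k / (4 * (1 - a ^ 2)) - 1) <= 2 * d + 16 / k ^ 2 + 8 * a / k + Rabs (V - 1).
Proof.
  intros Hk Ha Ha2 Hd HI.
  assert (Ha1 : 3 / 4 <= 1 - a ^ 2) by lra.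
  set (D := I - (1 - a ^ 2) * (4 / k * V)) in *.
  replace (I * k / (4 * (1 - a ^ 2)) - 1) with (D * (k / (4 * (1 - a ^ 2))) + (V - 1))
    by (unfold D; field; lra).
  eapply Rle_trans; [apply Rabs_triang|]. apply Rplus_le_compat_r.
  assert (Hkk : 0 < k / (4 * (1 - a ^ 2))) by (apply Rdiv_lt_0_compat; lra).
  rewrite Rabs_mult, (Rabs_pos_eq (k / (4 * (1 - a ^ 2)))) by lra.
  eapply Rle_trans; [apply Rmult_le_compat_r; [lra | apply HI]|].
  replace ((4 * d / k + 2 * PI * (6 / k ^ 2 + 2 * a / k) / k) * (k / (4 * (1 - a ^ 2))))
    with ((d + PI / 2 * (6 / k ^ 2 + 2 * a / k)) / (1 - a ^ 2)) by (field; lra).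
  pose proof PI_4. pose proof PI_RGT_0.
  assert (0 < a / k) by (apply Rdiv_lt_0_compat; lra).
  assert (0 < / k ^ 2) by (apply Rinv_0_lt_compat, pow_lt; lra).
  replace (6 / k ^ 2 + 2 * a / k) with (6 * / k ^ 2 + 2 * (a / k)) by (unfold Rdiv; ring).
  replace (16 / k ^ 2 + 8 * a / k) with (16 * / k ^ 2 + 8 * (a / k)) by (unfold Rdiv; ring).
  apply (Rmult_le_reg_r (1 - a ^ 2)); [lra|].
  unfold Rdiv at 1. rewrite Rmult_assoc, Rinv_l, Rmult_1_r by lra.
  assert (PI / 2 * (6 * / k ^ 2 + 2 * (a / k)) <= 2 * (6 * / k ^ 2 + 2 * (a / k)))
    by (apply Rmult_le_compat_r; lra).
  nra.
Qed.

Lemma sech_kernel_asymptotics c : 4 <= c ->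
  Rabs (4 / sinh c ^ 2 * (c * cosh c / sinh c - 1) / (16 * exp (- (2 * c)) * (c - 1)) - 1)
  <= 12 * exp (- (2 * c)).
Proof.
  intros Hc. rewrite exp_minus_twice, cosh_exp, sinh_exp.
  pose proof (exp_ge_16 c Hc). set (X := exp c) in *.
  set (Y := X ^ 2). assert (HY : 256 <= Y) by (unfold Y; nra).
  replace (4 / ((X - / X) / 2) ^ 2 * (c * ((X + / X) / 2) / ((X - / X) / 2) - 1)
           / (16 * / Y * (c - 1)) - 1)
    with (((4 * c - 2) * Y ^ 2 - 3 * (c - 1) * Y + (c - 1)) / ((Y - 1) ^ 3 * (c - 1)))
    by (unfold Y; field; repeat split; [nra | nra | lra]).
  assert (HD : 0 < (Y - 1) ^ 3 * (c - 1)) by (apply Rmult_lt_0_compat; [apply pow_lt|]; lra).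
  assert (HN : 0 <= (4 * c - 2) * Y ^ 2 - 3 * (c - 1) * Y + (c - 1)).
  { assert (3 * (c - 1) <= (4 * c - 2) * Y) by nra.
    assert (3 * (c - 1) * Y <= (4 * c - 2) * Y * Y) by (apply Rmult_le_compat_r; lra).
    simpl. lra. }
  rewrite Rabs_pos_eq by (apply Rmult_le_pos; [lra | left; apply Rinv_0_lt_compat; lra]).
  apply (Rmult_le_reg_r ((Y - 1) ^ 3 * (c - 1))); [lra|].
  unfold Rdiv. rewrite Rmult_assoc, Rinv_l, Rmult_1_r by lra.
  assert (N1 : (4 * c - 2) * Y ^ 2 - 3 * (c - 1) * Y + (c - 1) <= 5 * (c - 1) * Y ^ 2) by nra.
  assert (N2 : 5 * Y ^ 3 <= 12 * (Y - 1) ^ 3).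
  { assert ((Y - 1) ^ 3 = Y ^ 3 - 3 * Y ^ 2 + 3 * Y - 1) by ring. nra. }
  apply (Rmult_le_reg_r Y); [lra|].
  replace (12 * / Y * ((Y - 1) ^ 3 * (c - 1)) * Y) with (12 * (Y - 1) ^ 3 * (c - 1)) by (field; lra).
  assert (5 * Y ^ 3 * (c - 1) <= 12 * (Y - 1) ^ 3 * (c - 1)) by (apply Rmult_le_compat_r; lra).
  nra.
Qed.

(* The two rational inequalities behind sech_overlap_error_ratio, in the
   variable Y = e^{2c} >= 256: both parts of the error are O(e^{-2c} (c - 1)/k). *)
Lemma sech_error_main_term k c Y : 0 < k -> 4 <= c -> 256 <= Y ->
  Y * (c * (Y + 1) + (Y - 1)) / (k * (Y - 1) ^ 3) <= 16 * (c - 1) / (k * Y).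
Proof.
  intros Hk Hc HY. apply (Rmult_le_reg_r (k * (Y - 1) ^ 3 * Y)).
  { apply Rmult_lt_0_compat; [apply Rmult_lt_0_compat; [lra | apply pow_lt; lra] | lra]. }
  replace (Y * (c * (Y + 1) + (Y - 1)) / (k * (Y - 1) ^ 3) * (k * (Y - 1) ^ 3 * Y))
    with (Y ^ 2 * (c * (Y + 1) + (Y - 1))) by (field; lra).
  replace (16 * (c - 1) / (k * Y) * (k * (Y - 1) ^ 3 * Y)) with (16 * (c - 1) * (Y - 1) ^ 3)
    by (field; lra).
  assert (98 / 100 * Y ^ 3 <= (Y - 1) ^ 3).
  { assert ((Y - 1) ^ 3 = Y ^ 3 - 3 * Y ^ 2 + 3 * Y - 1) by ring. nra. }
  assert (Y ^ 2 * (c * (Y + 1) + (Y - 1)) <= Y ^ 2 * (3 / 2 * c * Y))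
    by (apply Rmult_le_compat_l; nra).
  assert (16 * (3 * c / 4) * (98 / 100 * Y ^ 3) <= 16 * (c - 1) * (Y - 1) ^ 3)
    by (apply Rmult_le_compat; nra).
  nra.
Qed.

Lemma sech_error_tail_term k c Y : 0 < k -> 4 <= c -> 256 <= Y ->
  4 * c ^ 3 / (k ^ 3 * (Y - 1)) <= c ^ 2 / k ^ 2 * (16 * (c - 1) / (k * Y)).
Proof.
  intros Hk Hc HY. apply (Rmult_le_reg_r (k ^ 3 * (Y - 1) * Y)).
  { apply Rmult_lt_0_compat; [apply Rmult_lt_0_compat; [apply pow_lt|] |]; lra. }
  replace (4 * c ^ 3 / (k ^ 3 * (Y - 1)) * (k ^ 3 * (Y - 1) * Y)) with (4 * c ^ 3 * Y) by (field; lra).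
  replace (c ^ 2 / k ^ 2 * (16 * (c - 1) / (k * Y)) * (k ^ 3 * (Y - 1) * Y))
    with (16 * c ^ 2 * (c - 1) * (Y - 1)) by (field; lra).
  assert (c * Y <= 4 * (c - 1) * (Y - 1)) by nra.
  assert (c ^ 2 * (c * Y) <= c ^ 2 * (4 * (c - 1) * (Y - 1))) by (apply Rmult_le_compat_l; nra).
  nra.
Qed.

Lemma sech_overlap_error_ratio k c d : 0 < k -> 4 <= c -> 0 <= d ->
  2 * (d + c ^ 2 / (2 * k ^ 2)) * (2 / (k * sinh c ^ 2) * (cosh c / sinh c * c + 1))
  + 2 * (c ^ 2 * exp (- c) / k ^ 2) * (c / (k * sinh c))
  <= (16 * (d + c ^ 2 / (2 * k ^ 2)) + c ^ 2 / k ^ 2) * (16 / k * exp (- (2 * c)) * (c - 1)).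
Proof.
  intros Hk Hc Hd. rewrite exp_minus_twice, exp_Ropp, cosh_exp, sinh_exp.
  pose proof (exp_ge_16 c Hc). set (X := exp c) in *.
  set (Y := X ^ 2). assert (HY : 256 <= Y) by (unfold Y; nra).
  set (al := d + c ^ 2 / (2 * k ^ 2)).
  assert (Hal : 0 <= al).
  { unfold al, Rdiv. pose proof (pow2_ge_0 c).
    assert (0 < / (2 * k ^ 2)) by (apply Rinv_0_lt_compat; nra). nra. }
  replace (2 * al * (2 / (k * ((X - / X) / 2) ^ 2) * ((X + / X) / 2 / ((X - / X) / 2) * c + 1))
           + 2 * (c ^ 2 * / X / k ^ 2) * (c / (k * ((X - / X) / 2))))
    with (16 * al * (Y * (c * (Y + 1) + (Y - 1)) / (k * (Y - 1) ^ 3)) + 4 * c ^ 3 / (k ^ 3 * (Y - 1)))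
    by (unfold Y; field; repeat split; nra).
  replace (16 / k * / Y * (c - 1)) with (16 * (c - 1) / (k * Y)) by (field; split; lra).
  pose proof (sech_error_main_term k c Y Hk Hc HY).
  pose proof (sech_error_tail_term k c Y Hk Hc HY).
  assert (16 * al * (Y * (c * (Y + 1) + (Y - 1)) / (k * (Y - 1) ^ 3))
          <= 16 * al * (16 * (c - 1) / (k * Y))) by (apply Rmult_le_compat_l; lra).
  lra.
Qed.

Lemma sech_overlap_relative I V T U a d k c : 0 < T -> a ^ 2 <= 1 / 4 -> 0 <= d -> 0 < k ->
  Rabs (I - (1 - a ^ 2) * V) <= U ->
  U <= (16 * (d + c ^ 2 / (2 * k ^ 2)) + c ^ 2 / k ^ 2) * T ->
  Rabs (I / ((1 - a ^ 2) * T) - 1) <= 22 * d + 12 * c ^ 2 / k ^ 2 + Rabs (V / T - 1).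
Proof.
  intros HT Ha2 Hd Hk HI HU.
  assert (Ha1 : 3 / 4 <= 1 - a ^ 2) by lra.
  replace (I / ((1 - a ^ 2) * T) - 1) with ((I - (1 - a ^ 2) * V) / ((1 - a ^ 2) * T) + (V / T - 1))
    by (field; split; lra).
  eapply Rle_trans; [apply Rabs_triang|]. apply Rplus_le_compat_r.
  assert (HaT : 0 < (1 - a ^ 2) * T) by nra.
  unfold Rdiv at 1. rewrite Rabs_mult, Rabs_inv, (Rabs_pos_eq ((1 - a ^ 2) * T)) by lra.
  apply (Rmult_le_reg_r ((1 - a ^ 2) * T)); [lra|].
  rewrite Rmult_assoc, Rinv_l, Rmult_1_r by lra.
  assert (0 <= c ^ 2 / k ^ 2)
    by (unfold Rdiv; apply Rmult_le_pos; [apply pow2_ge_0 | left; apply Rinv_0_lt_compat, pow_lt; lra]).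
  replace (16 * (d + c ^ 2 / (2 * k ^ 2)) + c ^ 2 / k ^ 2) with (16 * d + 9 * (c ^ 2 / k ^ 2)) in HU
    by (field; lra).
  assert (0 <= (16 * d + 9 * (c ^ 2 / k ^ 2)) * T) by (apply Rmult_le_pos; lra).
  replace (12 * c ^ 2 / k ^ 2) with (12 * (c ^ 2 / k ^ 2)) by (unfold Rdiv; ring).
  nra.
Qed.

Lemma overlap_expansion k a d w : 0 < k -> 0 < a -> a ^ 2 <= 1 / 4 -> 0 <= d ->
  4 <= 2 * k * a -> admissible_weight w a d ->
  let c := 2 * k * a in
  exists I1 I2,
    improper_integral (fun x => w x * tanh_kernel k a x) I1 /\
    improper_integral (fun x => w x * sech_kernel k a x) I2 /\
    exists r1 r2,
      Rabs r1 <= 2 * d + 16 / k ^ 2 + 8 * a / k + (4 + 16 * c) * exp (- (2 * c)) /\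
      Rabs r2 <= 22 * d + 48 * a ^ 2 + 12 * exp (- (2 * c)) /\
      I1 = 4 / k * (1 - a ^ 2) * (1 + r1) /\
      I2 = 16 / k * (1 - a ^ 2) * exp (- (2 * c)) * (c - 1) * (1 + r2).
Proof.
  intros Hk Ha Ha2 Hd Hc Hw c.
  destruct (weighted_tanh_kernel_integral k a w d Hk Ha Hd Hw) as [I1 [HI1 HB1]].
  destruct (weighted_sech_kernel_integral k a w d Hk Ha ltac:(lra) Hd Hw) as [I2 [HI2 HB2]].
  fold c in HB1, HB2. change (2 * k * a) with c in Hc.
  set (T := 16 / k * exp (- (2 * c)) * (c - 1)).
  assert (HT : 0 < T).
  { unfold T. apply Rmult_lt_0_compat; [|lra].
    apply Rmult_lt_0_compat; [apply Rdiv_lt_0_compat; lra | apply exp_pos]. }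
  exists I1, I2. split; [exact HI1|]. split; [exact HI2|].
  exists (I1 * k / (4 * (1 - a ^ 2)) - 1), (I2 / ((1 - a ^ 2) * T) - 1).
  split; [|split; [|split]].
  - eapply Rle_trans; [apply (tanh_overlap_relative k a d I1 _ Hk Ha Ha2 Hd HB1)|].
    pose proof (tanh_kernel_asymptotics c Hc). lra.
  - eapply Rle_trans.
    { apply (sech_overlap_relative I2 _ T _ a d k c HT Ha2 Hd Hk HB2), sech_overlap_error_ratio; auto. }
    replace (12 * c ^ 2 / k ^ 2) with (48 * a ^ 2) by (unfold c; field; lra).
    replace (4 / (k * sinh c ^ 2) * (c * cosh c / sinh c - 1) / T)
      with (4 / sinh c ^ 2 * (c * cosh c / sinh c - 1) / (16 * exp (- (2 * c)) * (c - 1))).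
    + pose proof (sech_kernel_asymptotics c Hc). lra.
    + pose proof (sinh_2ka_pos k a Hk Ha). pose proof (exp_pos (- (2 * c))). fold c in H.
      unfold T. field. repeat split; lra.
  - field. lra.
  - unfold T. field. pose proof (exp_pos (- (2 * c))). repeat split; lra.
Qed.

Lemma eta0_bounds x : 0 <= eta0 x <= 1.
Proof.
  unfold eta0. destruct (Rlt_dec (Rabs x) 1); [|lra].
  split; [apply sqrt_pos|]. apply Rle_trans with (sqrt 1); [|rewrite sqrt_1; lra].
  apply sqrt_le_1_alt. pose proof (pow2_ge_0 x). lra.
Qed.

Lemma eta0_square_defect a x : 0 < a < 1 -> Rabs (eta0 x ^ 2 - (1 - a ^ 2)) <= Rabs (x ^ 2 - a ^ 2).
Proof.
  intros Ha. unfold eta0. rewrite <- (pow2_abs x).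
  pose proof (Rabs_pos x). destruct (Rlt_dec (Rabs x) 1) as [Hx|Hx].
  - rewrite <- Rsqr_pow2, Rsqr_sqrt by nra. rewrite <- Rabs_Ropp. right. f_equal. ring.
  - apply Rnot_lt_le in Hx.
    rewrite (Rabs_pos_eq (Rabs x ^ 2 - a ^ 2)) by nra. simpl. rewrite Rmult_0_l.
    rewrite Rabs_left1 by nra. nra.
Qed.

Lemma admissible_weight_of_eta (f : R -> R) a d0 : continuity f -> 0 < a < 1 -> 0 <= d0 <= 1 ->
  (forall x, Rabs (f x - eta0 x) <= d0) -> admissible_weight (fun x => f x ^ 2) a (3 * d0).
Proof.
  intros Hc Ha Hd Hf. split; [apply C_pow2; auto | split]; intro x;
    pose proof (Rabs_le_inv _ _ (Hf x)); pose proof (eta0_bounds x).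
  - rewrite Rabs_pos_eq by apply pow2_ge_0. nra.
  - replace (f x ^ 2 - (1 - a ^ 2))
      with ((f x - eta0 x) * (f x + eta0 x) + (eta0 x ^ 2 - (1 - a ^ 2))) by ring.
    eapply Rle_trans; [apply Rabs_triang|].
    apply Rplus_le_compat; [|apply eta0_square_defect; auto].
    rewrite Rabs_mult.
    assert (Rabs (f x + eta0 x) <= 3) by (apply Rabs_le; lra).
    pose proof (Hf x). pose proof (Rabs_pos (f x - eta0 x)). pose proof (Rabs_pos (f x + eta0 x)).
    nra.
Qed.

Lemma eta_family_weight eta deta ddeta : eta_family eta deta ddeta ->
  exists Ceta e1, 0 < Ceta /\ 0 < e1 /\ forall eps a, 0 < eps < e1 -> 0 < a < 1 ->
    Ceta * Rpower eps (1 / 3) <= 1 ->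
    admissible_weight (fun x => eta eps x ^ 2) a (3 * (Ceta * Rpower eps (1 / 3))).
Proof.
  intros [[e0 [He0 Hsmooth]] [_ [_ [Ceta [e1 [HCeta [He1 Hglobal]]]]]]].
  exists Ceta, (Rmin e0 e1). split; [lra | split; [apply Rmin_pos; lra|]].
  intros eps a Heps Ha HCq.
  pose proof (Rmin_l e0 e1). pose proof (Rmin_r e0 e1).
  apply admissible_weight_of_eta; [| exact Ha | | ].
  - destruct (Hsmooth eps ltac:(lra)) as [_ [Hd _]]. exact (C_of_D _ _ Hd).
  - split; [apply Rmult_le_pos; [lra | left; apply exp_pos] | exact HCq].
  - intro x. apply (Hglobal eps ltac:(lra) x).
Qed.

Lemma cube_root_bounds eps : 0 < eps < 1 ->
  0 < Rpower eps (1 / 3) < 1 /\ Rpower eps (1 / 3) ^ 3 = eps.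
Proof.
  intros He. split; [split|].
  - apply exp_pos.
  - unfold Rpower. assert (ln eps < 0) by (rewrite <- ln_1; apply ln_increasing; lra).
    assert (exp (1 / 3 * ln eps) < exp 0) by (apply exp_increasing; lra).
    rewrite exp_0 in H0. exact H0.
  - rewrite <- Rpower_pow by apply exp_pos. rewrite Rpower_mult.
    replace (1 / 3 * INR 3) with 1 by (simpl; field). apply Rpower_1; lra.
Qed.

Lemma sixth_root_square eps : 0 < eps -> Rpower eps (1 / 6) ^ 2 = Rpower eps (1 / 3).
Proof.
  intros. rewrite <- Rpower_pow by apply exp_pos. rewrite Rpower_mult. f_equal. simpl; field.
Qed.

Lemma cube_root_lt eps q0 : 0 < q0 -> 0 < eps < q0 ^ 3 -> Rpower eps (1 / 3) < q0.
Proof.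
  intros Hq He. replace q0 with (Rpower (q0 ^ 3) (1 / 3)).
  - apply Rlt_Rpower_l; lra.
  - rewrite <- Rpower_pow by lra. rewrite Rpower_mult.
    replace (INR 3 * (1 / 3)) with 1 by (simpl; field). apply Rpower_1; lra.
Qed.

Lemma eps_log_eps_le eps : 0 < eps < 1 -> eps * Rabs (ln eps) <= 3 * Rpower eps (1 / 3) ^ 2.
Proof.
  intros He. destruct (cube_root_bounds eps He) as [Hq Hq3].
  set (q := Rpower eps (1 / 3)) in *.
  assert (Hl : ln eps = 3 * ln q) by (rewrite <- Hq3, ln_pow by lra; simpl; ring).
  assert (Hlq : ln q < 0) by (rewrite <- ln_1; apply ln_increasing; lra).
  assert (Hl2 : - ln q <= / q).
  { rewrite <- ln_Rinv by lra. pose proof (ln_le_minus_1 (/ q) ltac:(apply Rinv_0_lt_compat; lra)).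
    lra. }
  rewrite Hl, Rabs_left by lra. rewrite <- Hq3.
  assert (3 * q ^ 3 * (- ln q) <= 3 * q ^ 3 * / q) by (apply Rmult_le_compat_l; [nra | lra]).
  replace (3 * q ^ 3 * / q) with (3 * q ^ 2) in H by (field; lra). nra.
Qed.

Lemma Bpar_bounds a b b0 : 0 < a -> a ^ 2 <= 1 / 4 -> Rabs b <= b0 -> b0 < 1 ->
  3 * (1 - b0 ^ 2) / 8 <= Bpar a b <= 1.
Proof.
  intros Ha Ha2 Hb Hb0.
  assert (Hb2 : b ^ 2 <= b0 ^ 2) by (rewrite <- pow2_abs; pose proof (Rabs_pos b); apply pow_incr; lra).
  pose proof (Rabs_pos b).
  assert (H2 : 0 < sqrt 2) by (apply sqrt_lt_R0; lra).
  assert (0 <= 1 - b ^ 2) by nra.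
  assert (HB2 : Bpar a b ^ 2 = (1 - a ^ 2) * (1 - b ^ 2) / 2).
  { unfold Bpar.
    replace ((/ sqrt 2 * sqrt (1 - a ^ 2) * sqrt (1 - b ^ 2)) ^ 2) with
      ((sqrt (1 - a ^ 2) * sqrt (1 - a ^ 2)) * (sqrt (1 - b ^ 2) * sqrt (1 - b ^ 2))
       / (sqrt 2 * sqrt 2)) by (field; lra).
    rewrite !sqrt_sqrt; lra. }
  assert (HB0 : 0 <= Bpar a b)
    by (unfold Bpar; apply Rmult_le_pos; [apply Rmult_le_pos; [left; apply Rinv_0_lt_compat|]|];
        auto using sqrt_pos).
  pose proof (pow2_ge_0 a).
  assert (Bpar a b ^ 2 <= 1) by (rewrite HB2; nra).
  assert (Bpar a b <= 1) by nra.
  split; [|auto].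
  assert (3 * (1 - b0 ^ 2) / 8 <= Bpar a b ^ 2) by (rewrite HB2; nra).
  nra.
Qed.

Lemma sixth_root_bound_sq eps a C1 : 0 < eps -> 0 <= a -> a <= C1 * Rpower eps (1 / 6) ->
  a ^ 2 <= C1 ^ 2 * Rpower eps (1 / 3).
Proof.
  intros He Ha HaC. rewrite <- (sixth_root_square eps) by lra.
  replace (C1 ^ 2 * Rpower eps (1 / 6) ^ 2) with ((C1 * Rpower eps (1 / 6)) ^ 2) by ring.
  apply pow_incr; lra.
Qed.

Lemma inverse_scale_le eps B beta : 0 < eps < 1 -> 0 < beta -> beta <= B ->
  / (/ eps * B) <= Rpower eps (1 / 3) / beta.
Proof.
  intros He Hb HB. destruct (cube_root_bounds eps He) as [Hq Hq3].
  replace (/ (/ eps * B)) with (eps / B) by (field; lra).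
  assert (eps <= Rpower eps (1 / 3)) by (rewrite <- Hq3 at 1; simpl; nra).
  unfold Rdiv. apply Rmult_le_compat; try lra; [left; apply Rinv_0_lt_compat; lra|].
  apply Rinv_le_contravar; lra.
Qed.

(* The hypothesis e^{-4Ba/eps} = O(eps^2 |log eps|) says that the kinks are
   well separated, c = 2Ba/eps >= 4, and that the exponentially small terms
   e^{-2c} and c e^{-2c} are O(eps^{1/3}). *)
Lemma kink_separation eps B a C2 : 0 < eps < 1 -> 0 < B <= 1 -> 0 < a <= 1 -> 0 < C2 ->
  let q := Rpower eps (1 / 3) in let c := 2 * (/ eps * B) * a in
  exp (- (2 * c)) <= C2 * eps ^ 2 * Rabs (ln eps) -> 3 * C2 * q <= exp (-8) ->
  exp (- (2 * c)) <= 3 * C2 * q /\ c * exp (- (2 * c)) <= 6 * C2 * q /\ 4 <= c.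
Proof.
  intros Heps HB Ha HC2 q c Hsep Hq8.
  destruct (cube_root_bounds eps Heps) as [Hq Hq3]. fold q in Hq, Hq3.
  pose proof (eps_log_eps_le eps Heps) as Hlog. fold q in Hlog.
  pose proof (Rabs_pos (ln eps)).
  assert (Hepsq : eps <= q) by (rewrite <- Hq3; simpl; nra).
  assert (Hsmall : C2 * eps ^ 2 * Rabs (ln eps) <= 3 * C2 * q).
  { assert (eps ^ 2 * Rabs (ln eps) <= eps * (3 * q ^ 2))
      by (simpl; rewrite Rmult_1_r, Rmult_assoc; apply Rmult_le_compat_l; lra).
    assert (q ^ 2 <= 1) by (simpl; nra).
    assert (eps * q ^ 2 <= eps * 1) by (apply Rmult_le_compat_l; lra). nra. }
  assert (HE : exp (- (2 * c)) <= 3 * C2 * q) by lra.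
  assert (Hc2 : c <= 2 / eps).
  { unfold c. replace (2 * (/ eps * B) * a) with (2 / eps * (B * a)) by (field; lra).
    assert (0 < 2 / eps) by (apply Rdiv_lt_0_compat; lra).
    assert (B * a <= 1) by (rewrite <- (Rmult_1_r 1); apply Rmult_le_compat; lra). nra. }
  split; [exact HE | split].
  - apply Rle_trans with (2 / eps * (C2 * eps ^ 2 * Rabs (ln eps))).
    + assert (0 < / eps) by (apply Rinv_0_lt_compat; lra).
      assert (0 < / eps * B) by (apply Rmult_lt_0_compat; lra).
      assert (0 <= c) by (unfold c; nra).
      apply Rmult_le_compat; auto. left; apply exp_pos.
    + replace (2 / eps * (C2 * eps ^ 2 * Rabs (ln eps))) with (2 * C2 * (eps * Rabs (ln eps)))
        by (field; lra).
      assert (2 * C2 * (eps * Rabs (ln eps)) <= 2 * C2 * (3 * q ^ 2)) by (apply Rmult_le_compat_l; lra).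
      nra.
  - destruct (Rle_dec 4 c) as [|Hlt]; auto.
    assert (exp (-8) < exp (- (2 * c))) by (apply exp_increasing; lra). lra.
Qed.

(* The constant in the final O(eps^{1/3}) bounds; beta is a lower bound on B. *)
Definition overlap_constant (beta C1 C2 Ceta : R) : R :=
  66 * Ceta + 48 * C1 ^ 2 + 108 * C2 + 16 / beta ^ 2 + 8 / beta + 1.

Lemma overlap_constant_pos beta C1 C2 Ceta : 0 < beta -> 0 <= Ceta -> 0 < C2 ->
  0 < overlap_constant beta C1 C2 Ceta.
Proof.
  intros Hb HC HC2. unfold overlap_constant. pose proof (pow2_ge_0 C1).
  assert (0 < 16 / beta ^ 2) by (apply Rdiv_lt_0_compat; [|apply pow_lt]; lra).
  assert (0 < 8 / beta) by (apply Rdiv_lt_0_compat; lra). lra.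
Qed.

Lemma overlap_errors_small k a q beta C1 C2 Ceta c : 0 < k -> 0 < a <= 1 -> 0 < q <= 1 ->
  0 < beta -> 0 <= Ceta -> / k <= q / beta -> a ^ 2 <= C1 ^ 2 * q ->
  exp (- (2 * c)) <= 3 * C2 * q -> c * exp (- (2 * c)) <= 6 * C2 * q ->
  let K := overlap_constant beta C1 C2 Ceta in
  2 * (3 * (Ceta * q)) + 16 / k ^ 2 + 8 * a / k + (4 + 16 * c) * exp (- (2 * c)) <= K * q /\
  22 * (3 * (Ceta * q)) + 48 * a ^ 2 + 12 * exp (- (2 * c)) <= K * q.
Proof.
  intros Hk Ha Hq Hb HC Hik Ha2 HE HcE K.
  assert (Hik0 : 0 < / k) by (apply Rinv_0_lt_compat; lra).
  assert (Hqb : q / beta = / beta * q) by (unfold Rdiv; ring).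
  assert (Hk2 : 16 / k ^ 2 <= 16 / beta ^ 2 * q).
  { replace (16 / k ^ 2) with (16 * (/ k) ^ 2) by (field; lra).
    replace (16 / beta ^ 2 * q) with (16 * (/ beta ^ 2 * q)) by (field; lra).
    apply Rmult_le_compat_l; [lra|].
    apply Rle_trans with ((q / beta) ^ 2); [apply pow_incr; lra|].
    replace ((q / beta) ^ 2) with (/ beta ^ 2 * q * q) by (field; lra).
    assert (0 < / beta ^ 2 * q) by (apply Rmult_lt_0_compat; [apply Rinv_0_lt_compat, pow_lt|]; lra).
    nra. }
  assert (Hak : 8 * a / k <= 8 / beta * q).
  { replace (8 * a / k) with (8 * (a * / k)) by (field; lra).
    replace (8 / beta * q) with (8 * (q / beta)) by (field; lra).
    apply Rmult_le_compat_l; [lra|]. nra. }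
  assert (HKq : K * q = 66 * (Ceta * q) + 48 * (C1 ^ 2 * q) + 108 * (C2 * q)
                        + 16 / beta ^ 2 * q + 8 / beta * q + q) by (unfold K, overlap_constant; ring).
  assert (0 <= Ceta * q) by nra. assert (0 <= C1 ^ 2 * q) by (pose proof (pow2_ge_0 C1); nra).
  assert (0 <= exp (- (2 * c))) by (left; apply exp_pos).
  assert ((4 + 16 * c) * exp (- (2 * c)) = 4 * exp (- (2 * c)) + 16 * (c * exp (- (2 * c)))) by ring.
  assert (0 <= 16 / beta ^ 2 * q)
    by (apply Rmult_le_pos; [apply Rlt_le, Rdiv_lt_0_compat; [|apply pow_lt] |]; lra).
  assert (0 <= 8 / beta * q) by (apply Rmult_le_pos; [apply Rlt_le, Rdiv_lt_0_compat |]; lra).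
  split; lra.
Qed.

(* Below this threshold for q = eps^{1/3}, the eta-error is at most 1, the
   bound C1^2 q on a^2 is at most 1/4, and the separation bound 3 C2 q forces
   c >= 4. *)
Definition q_threshold (C1 C2 Ceta : R) : R :=
  Rmin (/ (Ceta + 1)) (Rmin (/ (4 * C1 ^ 2 + 1)) (exp (-8) / (3 * C2 + 1))).

Lemma q_threshold_pos C1 C2 Ceta : 0 <= Ceta -> 0 < C2 -> 0 < q_threshold C1 C2 Ceta.
Proof.
  intros. pose proof (pow2_ge_0 C1). pose proof (exp_pos (-8)).
  unfold q_threshold. repeat apply Rmin_pos; try apply Rinv_0_lt_compat; try apply Rdiv_lt_0_compat; lra.
Qed.

Lemma below_q_threshold q C1 C2 Ceta : 0 <= Ceta -> 0 < C2 -> 0 < q < q_threshold C1 C2 Ceta ->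
  Ceta * q <= 1 /\ C1 ^ 2 * q <= 1 / 4 /\ 3 * C2 * q <= exp (-8).
Proof.
  intros HC HC2 Hq. unfold q_threshold in Hq.
  pose proof (Rmin_l (/ (Ceta + 1)) (Rmin (/ (4 * C1 ^ 2 + 1)) (exp (-8) / (3 * C2 + 1)))).
  pose proof (Rmin_r (/ (Ceta + 1)) (Rmin (/ (4 * C1 ^ 2 + 1)) (exp (-8) / (3 * C2 + 1)))).
  pose proof (Rmin_l (/ (4 * C1 ^ 2 + 1)) (exp (-8) / (3 * C2 + 1))).
  pose proof (Rmin_r (/ (4 * C1 ^ 2 + 1)) (exp (-8) / (3 * C2 + 1))).
  pose proof (pow2_ge_0 C1).
  split; [|split].
  - apply Rle_trans with (Ceta * / (Ceta + 1)); [apply Rmult_le_compat_l; lra|].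
    apply (Rmult_le_reg_r (Ceta + 1)); [lra|]. rewrite Rmult_assoc, Rinv_l; lra.
  - apply Rle_trans with (C1 ^ 2 * / (4 * C1 ^ 2 + 1)); [apply Rmult_le_compat_l; lra|].
    apply (Rmult_le_reg_r (4 * C1 ^ 2 + 1)); [lra|]. rewrite Rmult_assoc, Rinv_l; lra.
  - apply Rle_trans with (3 * C2 * (exp (-8) / (3 * C2 + 1))); [apply Rmult_le_compat_l; lra|].
    pose proof (exp_pos (-8)).
    apply (Rmult_le_reg_r (3 * C2 + 1)); [lra|]. unfold Rdiv.
    replace (3 * C2 * (exp (-8) * / (3 * C2 + 1)) * (3 * C2 + 1)) with (3 * C2 * exp (-8))
      by (field; lra).
    nra.
Qed.

Lemma small_eps_regime (a b : R -> R) (b0 C1 C2 Ceta : R) :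
  0 < C2 -> 0 <= b0 < 1 -> 0 <= Ceta ->
  (exists e1 : R, 0 < e1 /\ forall eps : R, 0 < eps < e1 ->
     Rabs (b eps) <= b0 /\ 0 < a eps < 1 /\
     a eps <= C1 * Rpower eps (1/6) /\
     exp (- (4 * Bpar (a eps) (b eps) * a eps / eps)) <= C2 * eps ^ 2 * Rabs (ln eps)) ->
  exists e0, 0 < e0 /\ forall eps, 0 < eps < e0 ->
    let av := a eps in let B := Bpar av (b eps) in let k := / eps * B in
    let q := Rpower eps (1 / 3) in let c := 2 * k * av in
    let K := overlap_constant (3 * (1 - b0 ^ 2) / 8) C1 C2 Ceta in
    0 < k /\ 0 < av < 1 /\ av ^ 2 <= 1 / 4 /\ Ceta * q <= 1 /\ 4 <= c /\
    exp (- (4 * B * av / eps)) = exp (- (2 * c)) /\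
    2 * (3 * (Ceta * q)) + 16 / k ^ 2 + 8 * av / k + (4 + 16 * c) * exp (- (2 * c)) <= K * q /\
    22 * (3 * (Ceta * q)) + 48 * av ^ 2 + 12 * exp (- (2 * c)) <= K * q.
Proof.
  intros HC2 Hb0 HC [e1 [He1 Hh]].
  pose proof (q_threshold_pos C1 C2 Ceta HC HC2) as Hq0.
  set (q0 := q_threshold C1 C2 Ceta) in *.
  exists (Rmin e1 (Rmin 1 (q0 ^ 3))). split.
  { repeat apply Rmin_pos; try apply pow_lt; lra. }
  intros eps Heps av B k q c K.
  pose proof (Rmin_l e1 (Rmin 1 (q0 ^ 3))). pose proof (Rmin_r e1 (Rmin 1 (q0 ^ 3))).
  pose proof (Rmin_l 1 (q0 ^ 3)). pose proof (Rmin_r 1 (q0 ^ 3)).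
  destruct (Hh eps ltac:(lra)) as [Hb [Ha [HaC Hsep]]]. fold av B in Hb, Ha, HaC, Hsep.
  destruct (cube_root_bounds eps ltac:(lra)) as [Hq _]. fold q in Hq.
  pose proof (cube_root_lt eps q0 Hq0 ltac:(lra)) as Hqq0. fold q in Hqq0.
  destruct (below_q_threshold q C1 C2 Ceta HC HC2 (conj (proj1 Hq) Hqq0)) as [HCq [HC1q HC2q]].
  pose proof (sixth_root_bound_sq eps av C1 ltac:(lra) ltac:(lra) HaC) as Ha2. fold q in Ha2.
  destruct (Bpar_bounds av (b eps) b0 (proj1 Ha) ltac:(lra) Hb (proj2 Hb0)) as [HB1 HB2].
  fold B in HB1, HB2.
  assert (Hbeta : 0 < 3 * (1 - b0 ^ 2) / 8) by nra.
  assert (Hk : 0 < k) by (unfold k; apply Rmult_lt_0_compat; [apply Rinv_0_lt_compat|]; lra).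
  assert (Hsep_eq : exp (- (4 * B * av / eps)) = exp (- (2 * c))) by (f_equal; unfold c, k; field; lra).
  rewrite Hsep_eq in Hsep.
  destruct (kink_separation eps B av C2 ltac:(lra) ltac:(lra) ltac:(lra) HC2 Hsep HC2q)
    as [HE [HcE Hc4]].
  pose proof (inverse_scale_le eps B _ ltac:(lra) Hbeta HB1) as Hik.
  destruct (overlap_errors_small k av q _ C1 C2 Ceta c Hk ltac:(lra) ltac:(lra) Hbeta HC Hik Ha2 HE HcE)
    as [Herr1 Herr2].
  repeat split; auto; lra.
Qed.

Theorem lemma4 (eta deta ddeta : R -> R -> R) (a b adot bdot Bdot : R -> R)
  (b0 C1 C2 : R) :
  eta_family eta deta ddeta ->
  0 < C1 -> 0 < C2 -> 0 <= b0 < 1 ->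
  (exists e1 : R, 0 < e1 /\ forall eps : R, 0 < eps < e1 ->
     Rabs (b eps) <= b0 /\ 0 < a eps < 1 /\
     a eps <= C1 * Rpower eps (1/6) /\
     exp (- (4 * Bpar (a eps) (b eps) * a eps / eps))
       <= C2 * eps ^ 2 * Rabs (ln eps)) ->
  exists C e0 : R, 0 < C /\ 0 < e0 /\ forall eps : R, 0 < eps < e0 ->
    let av := a eps in let bv := b eps in
    let B := Bpar av bv in
    exists I1 I2 : R,
      improper_integral (f_tanh (eta eps) eps av bv) I1 /\
      improper_integral (f_sech (eta eps) eps av bv) I2 /\
      exists r1 r2 : R,
        Rabs r1 <= C * Rpower eps (1/3) /\ Rabs r2 <= C * Rpower eps (1/3) /\
        1/2 * bdot eps * sqrt (1 - bv ^ 2) * I1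
          - / eps * bv * (sqrt (1 - bv ^ 2)) ^ 3 * (B * adot eps + Bdot eps * av) * I2
        = 2 * eps * bdot eps * sqrt (1 - bv ^ 2) * / B * (1 - av ^ 2) * (1 + r1)
          - 16 * bv * (sqrt (1 - bv ^ 2)) ^ 3 * (adot eps + / B * Bdot eps * av)
              * (1 - av ^ 2) * exp (- (4 * B * av / eps))
              * (2 * B * av / eps - 1) * (1 + r2).
Proof.
  intros Hfam _ HC2 Hb0 Hab.
  destruct (eta_family_weight _ _ _ Hfam) as [Ceta [e1 [HCeta [He1 Hweight]]]].
  destruct (small_eps_regime a b b0 C1 C2 Ceta HC2 Hb0 ltac:(lra) Hab) as [e2 [He2 Hregime]].
  set (K := overlap_constant (3 * (1 - b0 ^ 2) / 8) C1 C2 Ceta).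
  assert (HK : 0 < K) by (apply overlap_constant_pos; nra).
  exists K, (Rmin e1 e2). split; [exact HK | split; [apply Rmin_pos; lra|]].
  intros eps Heps av bv B. pose proof (Rmin_l e1 e2). pose proof (Rmin_r e1 e2).
  destruct (Hregime eps ltac:(lra)) as [Hk [Ha [Ha2 [HCq [Hc [Hsep [Herr1 Herr2]]]]]]].
  change (Bpar (a eps) (b eps)) with B in Hk, Hc, Hsep, Herr1, Herr2.
  change (a eps) with av in Hk, Ha, Ha2, Hc, Hsep, Herr1, Herr2. fold K in Herr1, Herr2.
  set (k := / eps * B) in *. set (q := Rpower eps (1 / 3)) in *. set (c := 2 * k * av) in *.
  assert (Hq : 0 <= Ceta * q) by (apply Rmult_le_pos; [lra | left; apply exp_pos]).
  destruct (overlap_expansion k av (3 * (Ceta * q)) _ Hk (proj1 Ha) Ha2 ltac:(lra) Hc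
              (Hweight eps av ltac:(lra) Ha HCq))
    as [I1 [I2 [HI1 [HI2 [r1 [r2 [Hr1 [Hr2 [E1 E2]]]]]]]]].
  change (2 * k * av) with c in Hr1, Hr2, E2.
  exists I1, I2. split; [exact HI1 | split; [exact HI2|]].
  exists r1, r2. split; [lra | split; [lra|]].
  assert (0 < B) by (apply Rmult_lt_reg_l with (/ eps); [apply Rinv_0_lt_compat | fold k]; lra).
  rewrite Hsep, E1, E2. unfold c, k. field. lra.
Qed.
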